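(* Let $M\in\frac12\mathbb N$, $\varepsilon\in\{0,1\}$, $\tau\in\mathbb H$, and fix $z\in\mathbb C$. Then, as a function of $u$, $F_{M,\varepsilon}(z,u)$ satisfies, for all $\lambda,\mu\in\mathbb Z$, \[F_{M,\varepsilon}(z,u+\lambda\tau+\mu)=(-1)^{2M\mu+\lambda\varepsilon}e^{-2\pi iM(\lambda^2\tau+2\lambda u)}F_{M,\varepsilon}(z,u).\] Moreover, $u\mapsto F_{M,\varepsilon}(z,u)$ is meromorphic on $\mathbb C$, its only poles are simple poles located in $z+\mathbb Z\tau+\mathbb Z$, and its residue at $u=z$ equals $\frac{1}{2\pi i}$.
   Context: Notation: $e(x):=e^{2\pi ix}$, $q:=e(\tau)$. For $M\in\frac12\mathbb N$ and $\varepsilon\in\{0,1\}$, \[F_{M,\varepsilon}(z,u):=e\bigl(M(z-u)\bigr)\sum_{n\in\mathbb Z}\frac{(-1)^{n\varepsilon}e(-2Mnu)\,q^{Mn(n+1)}}{1-q^n e(z-u)}.\] *)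

From Stdlib Require Import Reals ZArith ClassicalEpsilon.
Open Scope R_scope.

Record Cplx := mkC { Re : R ; Im : R }.

Definition RtoC (r : R) : Cplx := mkC r 0.
Definition IZC (k : Z) : Cplx := RtoC (IZR k).
Definition C0 : Cplx := RtoC 0.
Definition C1 : Cplx := RtoC 1.
Definition Ci : Cplx := mkC 0 1.
Definition Cadd (a b : Cplx) : Cplx := mkC (Re a + Re b) (Im a + Im b).
Definition Copp (a : Cplx) : Cplx := mkC (- Re a) (- Im a).
Definition Csub (a b : Cplx) : Cplx := Cadd a (Copp b).
Definition Cmul (a b : Cplx) : Cplx :=
  mkC (Re a * Re b - Im a * Im b) (Re a * Im b + Im a * Re b).
(* inverse; Cinv 0 = 0 by the usual total convention *)
Definition Cinv (a : Cplx) : Cplx :=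
  mkC (Re a / (Re a * Re a + Im a * Im a)) (- Im a / (Re a * Re a + Im a * Im a)).
Definition Cdiv (a b : Cplx) : Cplx := Cmul a (Cinv b).
Definition Cnorm (a : Cplx) : R := sqrt (Re a * Re a + Im a * Im a).

Definition Cexp (a : Cplx) : Cplx := mkC (exp (Re a) * cos (Im a)) (exp (Re a) * sin (Im a)).

Definition e (x : Cplx) : Cplx := Cexp (Cmul (mkC 0 (2 * PI)) x).

Fixpoint Cpown (a : Cplx) (n : nat) : Cplx :=
  match n with O => C1 | S k => Cmul a (Cpown a k) end.
Definition Cpowz (a : Cplx) (k : Z) : Cplx :=
  match k with
  | Z0 => C1
  | Zpos p => Cpown a (Pos.to_nat p)
  | Zneg p => Cinv (Cpown a (Pos.to_nat p))
  end.

Definition sgn1 (k : Z) : Cplx := RtoC (powerRZ (-1) k).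

Fixpoint psum (f : nat -> Cplx) (n : nat) : Cplx :=
  match n with O => f O | S k => Cadd (psum f k) (f (S k)) end.

Definition series_lim (f : nat -> Cplx) (l : Cplx) : Prop :=
  forall eps : R, 0 < eps -> exists N : nat,
    forall n : nat, (N <= n)%nat -> Cnorm (Csub (psum f n) l) < eps.

Definition Zseries_lim (a : Z -> Cplx) (l : Cplx) : Prop :=
  exists l1 l2 : Cplx,
    series_lim (fun k => a (Z.of_nat k)) l1 /\
    series_lim (fun k => a (- Z.of_nat (S k))%Z) l2 /\
    l = Cadd l1 l2.

Lemma C_inhabited : inhabited Cplx.
Proof. exact (inhabits C0). Qed.

Definition Zsum (a : Z -> Cplx) : Cplx := epsilon C_inhabited (fun l => Zseries_lim a l).

(** * The function F_{M,eps}(z,u), with M = m/2 (m : nat) *)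
Definition Mval (m : nat) : Cplx := RtoC (INR m / 2).

Definition F (m : nat) (eps : Z) (tau z u : Cplx) : Cplx :=
  let q := e tau in
  let M := Mval m in
  Cmul (e (Cmul M (Csub z u)))
    (Zsum (fun n : Z =>
       Cdiv
         (Cmul (sgn1 (n * eps)%Z)
            (Cmul (e (Copp (Cmul (RtoC 2) (Cmul M (Cmul (IZC n) u)))))
                  (* q^{M n (n+1)}; the exponent m n (n+1)/2 is an integer *)
                  (Cpowz q (Z.of_nat m * (n * (n + 1)) / 2)%Z)))
         (Csub C1 (Cmul (Cpowz q n) (e (Csub z u)))))).

Definition Clim (f : Cplx -> Cplx) (p l : Cplx) : Prop :=
  forall eps : R, 0 < eps -> exists delta : R, 0 < delta /\
    forall u : Cplx, 0 < Cnorm (Csub u p) < delta -> Cnorm (Csub (f u) l) < eps.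

Definition C_differentiable_at (f : Cplx -> Cplx) (p : Cplx) : Prop :=
  exists l : Cplx, Clim (fun u => Cdiv (Csub (f u) (f p)) (Csub u p)) p l.

Definition holomorphic_at (f : Cplx -> Cplx) (p : Cplx) : Prop :=
  exists r : R, 0 < r /\ forall w : Cplx, Cnorm (Csub w p) < r -> C_differentiable_at f w.

Definition in_lattice (tau z w : Cplx) : Prop :=
  exists a b : Z, w = Cadd z (Cadd (Cmul (IZC a) tau) (IZC b)).

(* Near a point w off z + Zτ + Z the denominators are bounded below uniformly in n: only the
   two indices n with n Im τ closest to Im (w - z) can make them small.  The numerators and
   their first-order Taylor data grow at most exponentially in |n|, which the Gaussian decay
   of q^{Mn(n+1)} beats, so the series converges and satisfies a first-order Taylor bound
   with quadratic remainder near w; hence F is holomorphic there.  Replacing u by u + λτ + μ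
   reindexes the series by n ↦ n - λ, which is the quasi-periodicity.  Near u = z only the
   n = 0 denominator vanishes, as 1 - e(z - u) ~ 2πi (u - z), giving the residue 1/(2πi);
   the other points of z + Zτ + Z are reduced to this one by quasi-periodicity. *)
From Stdlib Require Import Reals ZArith Lra Lia Psatz Field ClassicalEpsilon FunctionalExtensionality.
From Coquelicot Require Import Coquelicot.
Open Scope R_scope.

Lemma Cext (a b : Cplx) : Re a = Re b -> Im a = Im b -> a = b.
Proof. destruct a, b; simpl; intros -> ->; reflexivity. Qed.

Lemma Cfield_theory : field_theory C0 C1 Cadd Cmul Csub Copp Cdiv Cinv (@eq Cplx).
Proof.
  constructor.
  - constructor; intros; apply Cext; simpl; ring.
  - intro H. injection H. lra.
  - reflexivity.
  - intros [a b] Hp.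
    assert (a * a + b * b <> 0).
    { intro H0. apply Hp. assert (a = 0) by nra. assert (b = 0) by nra. subst. reflexivity. }
    apply Cext; unfold Cinv, Cmul; simpl; field; auto.
Qed.
Add Field Cfield : Cfield_theory.

Definition toC (a : Cplx) : C := (Re a, Im a).

Lemma Cnorm_Cmod a : Cnorm a = Cmod (toC a).
Proof. unfold Cnorm, Cmod, toC; simpl. f_equal; ring. Qed.

Lemma Cnorm_ge0 a : 0 <= Cnorm a.
Proof. apply sqrt_pos. Qed.

Lemma Cnorm_mul a b : Cnorm (Cmul a b) = Cnorm a * Cnorm b.
Proof. rewrite !Cnorm_Cmod, <- Cmod_mult. reflexivity. Qed.

Lemma Cnorm_add a b : Cnorm (Cadd a b) <= Cnorm a + Cnorm b.
Proof. rewrite !Cnorm_Cmod. apply (Cmod_triangle (toC a) (toC b)). Qed.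

Lemma Cnorm_opp a : Cnorm (Copp a) = Cnorm a.
Proof. rewrite !Cnorm_Cmod. apply (Cmod_opp (toC a)). Qed.

Lemma Cnorm_sub_sym a b : Cnorm (Csub a b) = Cnorm (Csub b a).
Proof. replace (Csub a b) with (Copp (Csub b a)) by field. apply Cnorm_opp. Qed.

Lemma Cnorm_sub a b : Cnorm (Csub a b) <= Cnorm a + Cnorm b.
Proof. unfold Csub. rewrite <- (Cnorm_opp b). apply Cnorm_add. Qed.

Lemma Cnorm_sub_ge a b : Cnorm a - Cnorm b <= Cnorm (Csub a b).
Proof.
  replace a with (Cadd (Csub a b) b) at 1 by field.
  pose proof (Cnorm_add (Csub a b) b). lra.
Qed.

Lemma Cnorm_eq0 a : Cnorm a = 0 -> a = C0.
Proof.
  rewrite Cnorm_Cmod. intro H. apply Cmod_eq_0 in H. unfold toC in H.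
  injection H; intros; apply Cext; simpl; auto.
Qed.

Lemma Cnorm_C0 : Cnorm C0 = 0.
Proof. unfold Cnorm; simpl. rewrite Rmult_0_l, Rplus_0_l. apply sqrt_0. Qed.

Lemma Cnorm_C1 : Cnorm C1 = 1.
Proof. unfold Cnorm; simpl. replace (1 * 1 + 0 * 0) with 1 by ring. apply sqrt_1. Qed.

Lemma Cnorm_gt0 a : a <> C0 -> 0 < Cnorm a.
Proof. intro H. destruct (Cnorm_ge0 a); auto. exfalso; apply H, Cnorm_eq0; auto. Qed.

Lemma Cnorm_neq0 a : 0 < Cnorm a -> a <> C0.
Proof. intros H E. rewrite E, Cnorm_C0 in H. lra. Qed.

Lemma Cnorm_sub_diag w r : 0 < r -> Cnorm (Csub w w) < r.
Proof. intro. replace (Csub w w) with C0 by field. rewrite Cnorm_C0. auto. Qed.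

Lemma Cinv_C0 : Cinv C0 = C0.
Proof. apply Cext; unfold Cinv, C0, RtoC; simpl; unfold Rdiv; ring. Qed.

Lemma Cnorm_inv a : Cnorm (Cinv a) = / Cnorm a.
Proof.
  destruct (Req_dec (Cnorm a) 0) as [H|H].
  - apply Cnorm_eq0 in H. subst. rewrite Cinv_C0, Cnorm_C0, Rinv_0. reflexivity.
  - assert (Ha : a <> C0) by (intro; subst; apply H, Cnorm_C0).
    assert (E : Cmul (Cinv a) a = C1) by (field; auto).
    apply (f_equal Cnorm) in E. rewrite Cnorm_mul, Cnorm_C1 in E.
    apply (Rmult_eq_reg_r (Cnorm a)); [rewrite E; field |]; auto.
Qed.

Lemma Cnorm_div a b : Cnorm (Cdiv a b) = Cnorm a / Cnorm b.
Proof. unfold Cdiv. rewrite Cnorm_mul, Cnorm_inv. reflexivity. Qed.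

Lemma Cinv_mul a b : Cinv (Cmul a b) = Cmul (Cinv a) (Cinv b).
Proof.
  destruct (Req_dec (Cnorm a) 0) as [Ha|Ha].
  { apply Cnorm_eq0 in Ha. subst. replace (Cmul C0 b) with C0 by field.
    rewrite Cinv_C0. apply Cext; simpl; ring. }
  destruct (Req_dec (Cnorm b) 0) as [Hb|Hb].
  { apply Cnorm_eq0 in Hb. subst. replace (Cmul a C0) with C0 by field.
    rewrite Cinv_C0. apply Cext; simpl; ring. }
  field. split; intro E; subst; rewrite Cnorm_C0 in *; auto.
Qed.

Lemma Cinv_inv h : h <> C0 -> Cinv (Cinv h) = h.
Proof. intro H. field. split; auto. intro E; injection E; intros; lra. Qed.

Lemma Cnorm_RtoC r : Cnorm (RtoC r) = Rabs r.
Proof. unfold Cnorm, RtoC; simpl. rewrite <- sqrt_Rsqr_abs. unfold Rsqr. f_equal; ring. Qed.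

Lemma Cnorm_2PIi : Cnorm (mkC 0 (2 * PI)) = 2 * PI.
Proof.
  unfold Cnorm; simpl. replace (0 * 0 + 2 * PI * (2 * PI)) with ((2 * PI) * (2 * PI)) by ring.
  apply sqrt_square. pose proof PI_RGT_0; lra.
Qed.

Lemma Cnorm_sq a : Cnorm a * Cnorm a = Re a * Re a + Im a * Im a.
Proof. unfold Cnorm. apply sqrt_sqrt. nra. Qed.

Lemma Rabs_sq x : Rabs x * Rabs x = x * x.
Proof. rewrite <- Rabs_mult. apply Rabs_right. nra. Qed.

Lemma Re_le_Cnorm a : Rabs (Re a) <= Cnorm a.
Proof.
  pose proof (Cnorm_sq a). pose proof (Rabs_sq (Re a)). pose proof (Cnorm_ge0 a).
  pose proof (Rabs_pos (Re a)). nra.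
Qed.

Lemma Im_le_Cnorm a : Rabs (Im a) <= Cnorm a.
Proof.
  pose proof (Cnorm_sq a). pose proof (Rabs_sq (Im a)). pose proof (Cnorm_ge0 a).
  pose proof (Rabs_pos (Im a)). nra.
Qed.

Lemma Cnorm_le_ReIm a : Cnorm a <= Rabs (Re a) + Rabs (Im a).
Proof.
  pose proof (Cnorm_sq a). pose proof (Cnorm_ge0 a).
  pose proof (Rabs_pos (Re a)). pose proof (Rabs_pos (Im a)).
  pose proof (Rabs_sq (Re a)). pose proof (Rabs_sq (Im a)).
  nra.
Qed.

Lemma exp_le_exp x y : x <= y -> exp x <= exp y.
Proof. intros [H | ->]; [left; apply exp_increasing|]; lra. Qed.

Lemma Rdiv_le_compat p q s t : 0 <= p <= q -> 0 < t <= s -> p / s <= q / t.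
Proof.
  intros Hp Ht. unfold Rdiv. apply Rmult_le_compat; try lra.
  - left; apply Rinv_0_lt_compat; lra.
  - apply Rinv_le_contravar; lra.
Qed.

Lemma Rmin_div_mul_le r eps L : 0 < L -> Rmin r (eps / L) * L <= eps.
Proof.
  intro HL. pose proof (Rmin_r r (eps / L)).
  apply (Rmult_le_compat_r L) in H; [| lra]. unfold Rdiv in H.
  rewrite Rmult_assoc, Rinv_l in H by lra. lra.
Qed.

Lemma Rabs_le_between c b : Rmin 0 b <= c <= Rmax 0 b -> Rabs c <= Rabs b.
Proof.
  unfold Rmin, Rmax. intros. destruct (Rle_dec 0 b); unfold Rabs;
  repeat destruct Rcase_abs; lra.
Qed.

Lemma Rabs_sin_le b : Rabs (sin b) <= Rabs b.
Proof.
  destruct (MVT_abs sin cos 0 b) as [c [H1 H2]].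
  { intros; apply derivable_pt_lim_sin. }
  rewrite sin_0, !Rminus_0_r in H1. rewrite H1.
  assert (Rabs (cos c) <= 1) by (apply Rabs_le; apply COS_bound).
  pose proof (Rabs_pos b). nra.
Qed.

Lemma Rabs_cos_sub1_le b : Rabs (cos b - 1) <= b * b.
Proof.
  destruct (MVT_abs cos (fun x => - sin x) 0 b) as [c [H1 H2]].
  { intros; apply derivable_pt_lim_cos. }
  rewrite cos_0, Rminus_0_r in H1. rewrite H1, Rabs_Ropp.
  pose proof (Rabs_sin_le c). pose proof (Rabs_le_between _ _ H2).
  pose proof (Rabs_pos b). pose proof (Rabs_pos (sin c)).
  rewrite <- (Rabs_sq b). nra.
Qed.

Lemma Rabs_sin_sub_le b : Rabs (sin b - b) <= Rabs b * (b * b).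
Proof.
  destruct (MVT_abs (fun x => sin x - x) (fun x => cos x - 1) 0 b) as [c [H1 H2]].
  { intros. apply (derivable_pt_lim_minus sin id).
    apply derivable_pt_lim_sin. apply derivable_pt_lim_id. }
  rewrite sin_0, !Rminus_0_r in H1. rewrite H1.
  pose proof (Rabs_cos_sub1_le c). pose proof (Rabs_le_between _ _ H2).
  pose proof (Rabs_pos b). pose proof (Rabs_pos c).
  assert (c * c <= b * b) by (rewrite <- (Rabs_sq b), <- (Rabs_sq c); nra).
  pose proof (Rabs_pos (cos c - 1)). nra.
Qed.

Lemma Rabs_exp_sub1_le a : Rabs (exp a - 1) <= Rabs a * exp (Rabs a).
Proof.
  destruct (MVT_abs exp exp 0 a) as [c [H1 H2]].
  { intros; apply derivable_pt_lim_exp. }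
  rewrite exp_0, !Rminus_0_r in H1. rewrite H1.
  pose proof (Rabs_le_between _ _ H2). rewrite (Rabs_right (exp c)) by (left; apply exp_pos).
  assert (exp c <= exp (Rabs a)) by (apply exp_le_exp; pose proof (Rle_abs c); lra).
  pose proof (Rabs_pos a). nra.
Qed.

Lemma Rabs_exp_sub1_sub_le a : Rabs (exp a - 1 - a) <= (a * a) * exp (Rabs a).
Proof.
  destruct (MVT_abs (fun x => exp x - x) (fun x => exp x - 1) 0 a) as [c [H1 H2]].
  { intros. apply (derivable_pt_lim_minus exp id).
    apply derivable_pt_lim_exp. apply derivable_pt_lim_id. }
  rewrite exp_0, !Rminus_0_r in H1. replace (exp a - 1 - a) with (exp a - a - 1) by ring.
  rewrite H1.
  pose proof (Rabs_exp_sub1_le c). pose proof (Rabs_le_between _ _ H2).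
  assert (exp (Rabs c) <= exp (Rabs a)) by (apply exp_le_exp; auto).
  pose proof (Rabs_pos a). pose proof (Rabs_pos c). pose proof (exp_pos (Rabs c)).
  rewrite <- (Rabs_sq a).
  assert (Rabs c * exp (Rabs c) <= Rabs a * exp (Rabs a)) by (apply Rmult_le_compat; lra).
  pose proof (Rabs_pos (exp c - 1)). nra.
Qed.

Lemma Cexp_add a b : Cexp (Cadd a b) = Cmul (Cexp a) (Cexp b).
Proof.
  apply Cext; unfold Cexp, Cmul; simpl; rewrite exp_plus.
  - rewrite cos_plus; ring.
  - rewrite sin_plus; ring.
Qed.

Lemma Cnorm_Cexp a : Cnorm (Cexp a) = exp (Re a).
Proof.
  unfold Cnorm, Cexp; simpl.
  replace (exp (Re a) * cos (Im a) * (exp (Re a) * cos (Im a)) +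
           exp (Re a) * sin (Im a) * (exp (Re a) * sin (Im a)))
    with (exp (Re a) * exp (Re a) * (sin (Im a) ^ 2 + cos (Im a) ^ 2)) by ring.
  replace (sin (Im a) ^ 2 + cos (Im a) ^ 2) with 1 by (rewrite <- (sin2_cos2 (Im a)); unfold Rsqr; ring).
  rewrite Rmult_1_r. apply sqrt_square. left; apply exp_pos.
Qed.

Lemma Cexp_0 : Cexp C0 = C1.
Proof. apply Cext; unfold Cexp; simpl; rewrite exp_0, ?cos_0, ?sin_0; ring. Qed.

Lemma Cexp_opp a : Cmul (Cexp a) (Cexp (Copp a)) = C1.
Proof. rewrite <- Cexp_add. replace (Cadd a (Copp a)) with C0 by field. apply Cexp_0. Qed.

Lemma Cexp_neq0 a : Cexp a <> C0.
Proof.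
  intro H. pose proof (Cexp_opp a) as E. rewrite H in E.
  assert (C0 = C1) by (rewrite <- E; field). injection H0; lra.
Qed.

Lemma Cexp_inv a : Cinv (Cexp a) = Cexp (Copp a).
Proof.
  pose proof (Cexp_neq0 a).
  replace (Cexp (Copp a)) with (Cmul (Cinv (Cexp a)) (Cmul (Cexp a) (Cexp (Copp a)))) by (field; auto).
  rewrite Cexp_opp. field. auto.
Qed.

Lemma exp_cos_sub_le a b N : Rabs a <= N -> Rabs b <= N ->
  Rabs (exp a * cos b - 1 - a) <= exp N * (a * a + b * b).
Proof.
  intros Ha Hb.
  replace (exp a * cos b - 1 - a) with ((exp a - 1 - a) + exp a * (cos b - 1)) by ring.
  pose proof (Rabs_exp_sub1_sub_le a). pose proof (Rabs_cos_sub1_le b).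
  assert (exp (Rabs a) <= exp N) by (apply exp_le_exp; auto).
  assert (exp a <= exp N) by (apply exp_le_exp; pose proof (Rle_abs a); lra).
  pose proof (exp_pos a).
  eapply Rle_trans. apply Rabs_triang. rewrite Rabs_mult, (Rabs_right (exp a)) by lra.
  assert (a * a * exp (Rabs a) <= a * a * exp N) by (apply Rmult_le_compat_l; nra).
  assert (exp a * Rabs (cos b - 1) <= exp N * (b * b))
    by (apply Rmult_le_compat; try lra; apply Rabs_pos).
  nra.
Qed.

Lemma exp_sin_sub_le a b N : Rabs a <= N -> Rabs b <= N ->
  Rabs (exp a * sin b - b) <= exp N * (Rabs a * Rabs b) + N * (b * b).
Proof.
  intros Ha Hb.
  replace (exp a * sin b - b) with ((exp a - 1) * sin b + (sin b - b)) by ring.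
  pose proof (Rabs_exp_sub1_le a). pose proof (Rabs_sin_sub_le b). pose proof (Rabs_sin_le b).
  assert (exp (Rabs a) <= exp N) by (apply exp_le_exp; auto).
  pose proof (Rabs_pos a). pose proof (Rabs_pos b). pose proof (exp_pos (Rabs a)).
  eapply Rle_trans. apply Rabs_triang. rewrite Rabs_mult.
  assert (Rabs (exp a - 1) * Rabs (sin b) <= (Rabs a * exp (Rabs a)) * Rabs b)
    by (apply Rmult_le_compat; auto using Rabs_pos).
  assert (Rabs a * exp (Rabs a) * Rabs b <= exp N * (Rabs a * Rabs b)).
  { replace (Rabs a * exp (Rabs a) * Rabs b) with (exp (Rabs a) * (Rabs a * Rabs b)) by ring.
    apply Rmult_le_compat_r; nra. }
  assert (Rabs b * (b * b) <= N * (b * b)) by (apply Rmult_le_compat_r; nra).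
  lra.
Qed.

Definition Cexp_rem_coef (r : R) := 2 * exp r + r.

Lemma Cexp_rem_coef_ge0 r : 0 <= r -> 0 <= Cexp_rem_coef r.
Proof. unfold Cexp_rem_coef. pose proof (exp_pos r). lra. Qed.

Lemma Cexp_rem_coef_le r s : r <= s -> Cexp_rem_coef r <= Cexp_rem_coef s.
Proof. unfold Cexp_rem_coef. intro. pose proof (exp_le_exp r s H). lra. Qed.

Lemma Cexp_sub1_sub_le h :
  Cnorm (Csub (Csub (Cexp h) C1) h) <= Cexp_rem_coef (Cnorm h) * (Cnorm h * Cnorm h).
Proof.
  eapply Rle_trans. apply Cnorm_le_ReIm.
  pose proof (Re_le_Cnorm h) as Ha. pose proof (Im_le_Cnorm h) as Hb.
  pose proof (Cnorm_sq h) as HN. pose proof (Cnorm_ge0 h).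
  destruct h as [a b]. unfold Cexp, Csub, Cadd, Copp, C1, RtoC in *; simpl in *.
  set (N := Cnorm (mkC a b)) in *.
  replace (exp a * cos b + - (1) + - a) with (exp a * cos b - 1 - a) by ring.
  replace (exp a * sin b + - 0 + - b) with (exp a * sin b - b) by ring.
  pose proof (exp_cos_sub_le a b N Ha Hb). pose proof (exp_sin_sub_le a b N Ha Hb).
  pose proof (Rabs_pos a). pose proof (Rabs_pos b). pose proof (exp_pos N).
  pose proof (Rabs_sq a). pose proof (Rabs_sq b).
  assert (Rabs a * Rabs b <= N * N) by nra.
  assert (exp N * (Rabs a * Rabs b) <= exp N * (N * N)) by (apply Rmult_le_compat_l; lra).
  assert (N * (b * b) <= N * (N * N)) by (apply Rmult_le_compat_l; nra).
  unfold Cexp_rem_coef. nra.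
Qed.

Lemma e_add a b : e (Cadd a b) = Cmul (e a) (e b).
Proof. unfold e. rewrite <- Cexp_add. f_equal. field. Qed.

Lemma e_opp a : e (Copp a) = Cinv (e a).
Proof. unfold e. rewrite Cexp_inv. f_equal. field. Qed.

Lemma e_neq0 a : e a <> C0.
Proof. apply Cexp_neq0. Qed.

Lemma Cnorm_e a : Cnorm (e a) = exp (- (2 * PI) * Im a).
Proof. unfold e. rewrite Cnorm_Cexp. f_equal. simpl. ring. Qed.

Lemma e_0 : e C0 = C1.
Proof. unfold e. replace (Cmul (mkC 0 (2 * PI)) C0) with C0 by field. apply Cexp_0. Qed.

Lemma e_int k : e (IZC k) = C1.
Proof.
  unfold e, IZC, RtoC, Cexp, C1, RtoC. apply Cext; simpl;
  replace (0 * IZR k - 2 * PI * 0) with 0 by ring; rewrite exp_0;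
  replace (0 * 0 + 2 * PI * IZR k) with (2 * (IZR k * PI)) by ring.
  - rewrite cos_2a_sin, sin_eq_0_1 by (exists k; auto). ring.
  - rewrite sin_2a, sin_eq_0_1 by (exists k; auto). ring.
Qed.

Lemma e_add_int x k : e (Cadd x (IZC k)) = e x.
Proof. rewrite e_add, e_int. field. Qed.

Lemma cos_IZR_PI k : cos (IZR k * PI) = powerRZ (-1) k.
Proof.
  assert (Hn : forall n : nat, cos (INR n * PI) = (-1) ^ n).
  { induction n. simpl. rewrite Rmult_0_l, cos_0; auto.
    rewrite S_INR. replace ((INR n + 1) * PI) with (INR n * PI + PI) by ring.
    rewrite neg_cos, IHn. simpl. ring. }
  destruct k as [|p|p]; simpl.
  - rewrite Rmult_0_l, cos_0. auto.
  - rewrite <- positive_nat_Z, <- INR_IZR_INZ. apply Hn.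
  - rewrite <- Pos2Z.opp_pos, opp_IZR, <- positive_nat_Z, <- INR_IZR_INZ.
    replace (- INR (Pos.to_nat p) * PI) with (- (INR (Pos.to_nat p) * PI)) by ring.
    rewrite cos_neg, Hn, <- pow_inv. f_equal. field.
Qed.

Lemma e_half_int k : e (RtoC (IZR k / 2)) = sgn1 k.
Proof.
  unfold e, sgn1, Cexp, RtoC. apply Cext; simpl;
  replace (0 * (IZR k / 2) - 2 * PI * 0) with 0 by ring; rewrite exp_0;
  replace (0 * 0 + 2 * PI * (IZR k / 2)) with (IZR k * PI) by field.
  - rewrite cos_IZR_PI. ring.
  - rewrite sin_eq_0_1 by (exists k; auto). ring.
Qed.

Lemma e_eq1 x : e x = C1 -> exists k, x = IZC k.
Proof.
  destruct x as [a b]. unfold e, Cexp, C1, RtoC. intro H. injection H. simpl. clear H.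
  replace (0 * a - 2 * PI * b) with (- (2 * PI * b)) by ring.
  replace (0 * b + 2 * PI * a) with (2 * (PI * a)) by ring.
  intros Hs Hc. pose proof (exp_pos (- (2 * PI * b))).
  assert (Hs0 : sin (2 * (PI * a)) = 0) by (apply (Rmult_eq_reg_l (exp (- (2 * PI * b)))); lra).
  pose proof (sin2_cos2 (2 * (PI * a))) as Hsc. rewrite Hs0 in Hsc. unfold Rsqr in Hsc.
  assert (Hc1 : cos (2 * (PI * a)) = 1).
  { assert (cos (2 * (PI * a)) = 1 \/ cos (2 * (PI * a)) = -1) as [|E] by nra; auto.
    rewrite E in Hc. nra. }
  rewrite Hc1, Rmult_1_r in Hc.
  assert (b = 0).
  { apply (f_equal ln) in Hc. rewrite ln_exp, ln_1 in Hc. pose proof PI_RGT_0. nra. }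
  rewrite cos_2a_sin in Hc1. assert (sin (PI * a) = 0) as Hk by nra.
  apply sin_eq_0_0 in Hk. destruct Hk as [k Hk].
  exists k. subst b. unfold IZC, RtoC. f_equal. pose proof PI_RGT_0.
  apply (Rmult_eq_reg_r PI); lra.
Qed.

Lemma Cpown_e a n : Cpown (e a) n = e (Cmul (RtoC (INR n)) a).
Proof.
  induction n; simpl Cpown.
  - replace (Cmul (RtoC (INR 0)) a) with C0 by (apply Cext; simpl; ring). rewrite e_0. auto.
  - rewrite IHn, <- e_add. f_equal. rewrite S_INR. apply Cext; simpl; ring.
Qed.

Lemma Cpowz_e a k : Cpowz (e a) k = e (Cmul (IZC k) a).
Proof.
  destruct k as [|p|p]; simpl.
  - replace (Cmul (IZC 0) a) with C0 by (apply Cext; simpl; ring). rewrite e_0. auto.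
  - rewrite Cpown_e. f_equal. unfold IZC. rewrite <- positive_nat_Z, <- INR_IZR_INZ. auto.
  - rewrite Cpown_e, <- e_opp. f_equal. unfold IZC.
    rewrite <- Pos2Z.opp_pos, opp_IZR, <- positive_nat_Z, <- INR_IZR_INZ.
    apply Cext; simpl; ring.
Qed.

Lemma Cnorm_Cpowz_e tau k : Cnorm (Cpowz (e tau) k) = exp (- (2 * PI) * (IZR k * Im tau)).
Proof. rewrite Cpowz_e, Cnorm_e. f_equal. f_equal. simpl. ring. Qed.

Lemma pow_m1 n : (-1) ^ n = 1 \/ (-1) ^ n = -1.
Proof. induction n; simpl. auto. destruct IHn as [-> | ->]; [right|left]; ring. Qed.

Lemma Cnorm_sgn1 k : Cnorm (sgn1 k) = 1.
Proof.
  unfold sgn1. rewrite Cnorm_RtoC.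
  destruct k; simpl; [apply Rabs_R1 | |];
  destruct (pow_m1 (Pos.to_nat p)) as [-> | ->];
  rewrite ?Rinv_1, ?(Rinv_opp 1), ?Rinv_1; try apply Rabs_R1; rewrite Rabs_left; lra.
Qed.

Lemma sgn1_add a b : sgn1 (a + b) = Cmul (sgn1 a) (sgn1 b).
Proof. unfold sgn1. rewrite powerRZ_add by lra. apply Cext; simpl; ring. Qed.

Lemma sgn1_add_even a k : sgn1 (a + 2 * k) = sgn1 a.
Proof.
  assert (Hsq : powerRZ (-1) k * powerRZ (-1) k = 1).
  { destruct k; simpl; [ring | |];
      destruct (pow_m1 (Pos.to_nat p)) as [-> | ->]; field. }
  replace (a + 2 * k)%Z with (a + (k + k))%Z by ring.
  rewrite !sgn1_add.
  replace (Cmul (sgn1 k) (sgn1 k)) with C1 by (unfold sgn1; apply Cext; simpl; rewrite ?Hsq; ring).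
  field.
Qed.

Definition Cseq_lim (x : nat -> Cplx) (l : Cplx) : Prop :=
  forall eps : R, 0 < eps -> exists N : nat,
    forall n : nat, (N <= n)%nat -> Cnorm (Csub (x n) l) < eps.

Lemma Cseq_lim_unique x l1 l2 : Cseq_lim x l1 -> Cseq_lim x l2 -> l1 = l2.
Proof.
  intros H1 H2. destruct (Req_dec (Cnorm (Csub l1 l2)) 0) as [H|H].
  - apply Cnorm_eq0 in H. replace l1 with (Cadd (Csub l1 l2) l2) by field. rewrite H. field.
  - pose proof (Cnorm_ge0 (Csub l1 l2)).
    set (d := Cnorm (Csub l1 l2)) in *.
    destruct (H1 (d / 2)) as [N1 HN1]. lra. destruct (H2 (d / 2)) as [N2 HN2]. lra.
    specialize (HN1 (N1 + N2)%nat ltac:(lia)). specialize (HN2 (N1 + N2)%nat ltac:(lia)).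
    set (x' := x (N1 + N2)%nat) in *.
    pose proof (Cnorm_sub (Csub x' l2) (Csub x' l1)) as T.
    replace (Csub (Csub x' l2) (Csub x' l1)) with (Csub l1 l2) in T by field.
    fold d in T. lra.
Qed.

Lemma Cseq_lim_add x y lx ly : Cseq_lim x lx -> Cseq_lim y ly ->
  Cseq_lim (fun n => Cadd (x n) (y n)) (Cadd lx ly).
Proof.
  intros H1 H2 eps Heps. destruct (H1 (eps / 2)) as [N1 HN1]. lra.
  destruct (H2 (eps / 2)) as [N2 HN2]. lra. exists (N1 + N2)%nat. intros n Hn.
  replace (Csub (Cadd (x n) (y n)) (Cadd lx ly)) with (Cadd (Csub (x n) lx) (Csub (y n) ly)) by field.
  eapply Rle_lt_trans. apply Cnorm_add.
  specialize (HN1 n ltac:(lia)). specialize (HN2 n ltac:(lia)). lra.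
Qed.

Lemma Cseq_lim_scal c x l : Cseq_lim x l -> Cseq_lim (fun n => Cmul c (x n)) (Cmul c l).
Proof.
  intros H eps Heps. pose proof (Cnorm_ge0 c).
  destruct (H (eps / (Cnorm c + 1))) as [N HN]. { apply Rdiv_lt_0_compat; lra. }
  exists N. intros n Hn. specialize (HN n Hn).
  replace (Csub (Cmul c (x n)) (Cmul c l)) with (Cmul c (Csub (x n) l)) by field.
  rewrite Cnorm_mul. pose proof (Cnorm_ge0 (Csub (x n) l)).
  assert ((Cnorm c + 1) * Cnorm (Csub (x n) l) < (Cnorm c + 1) * (eps / (Cnorm c + 1)))
    by (apply Rmult_lt_compat_l; lra).
  replace ((Cnorm c + 1) * (eps / (Cnorm c + 1))) with eps in H2 by (field; lra). nra.
Qed.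

Lemma Cseq_lim_ext x y l : (forall n, x n = y n) -> Cseq_lim x l -> Cseq_lim y l.
Proof. intros E H eps He. destruct (H eps He) as [N HN]. exists N. intros n Hn. rewrite <- E. auto. Qed.

Lemma Cseq_lim_sub x y lx ly : Cseq_lim x lx -> Cseq_lim y ly ->
  Cseq_lim (fun n => Csub (x n) (y n)) (Csub lx ly).
Proof.
  intros Hx Hy. apply Cseq_lim_add; auto.
  apply (Cseq_lim_ext (fun n => Cmul (Copp C1) (y n))); [intro; field |].
  replace (Copp ly) with (Cmul (Copp C1) ly) by field. apply Cseq_lim_scal; auto.
Qed.

Lemma Cseq_lim_norm_le x l B : Cseq_lim x l -> (forall n, Cnorm (x n) <= B) -> Cnorm l <= B.
Proof.
  intros H Hb. apply Rnot_lt_le. intro Hlt.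
  destruct (H (Cnorm l - B)) as [N HN]. lra.
  specialize (HN N (le_n _)). specialize (Hb N).
  pose proof (Cnorm_sub_ge l (x N)). rewrite Cnorm_sub_sym in HN. lra.
Qed.

Lemma psum_add f g n : psum (fun k => Cadd (f k) (g k)) n = Cadd (psum f n) (psum g n).
Proof. induction n; simpl; auto. rewrite IHn. field. Qed.

Lemma psum_scal c f n : psum (fun k => Cmul c (f k)) n = Cmul c (psum f n).
Proof. induction n; simpl; auto. rewrite IHn. field. Qed.

Lemma psum_ext f g n : (forall k, f k = g k) -> psum f n = psum g n.
Proof. intro H. induction n; simpl; rewrite ?IHn, H; auto. Qed.

Lemma psum_shift f n : psum (fun k => f (S k)) n = Csub (psum f (S n)) (f O).
Proof. induction n; simpl in *; [| rewrite IHn]; field. Qed.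

Lemma psum_cons x f n :
  psum (fun k => match k with O => x | S j => f j end) (S n) = Cadd x (psum f n).
Proof.
  induction n; [reflexivity |].
  change (Cadd (psum (fun k => match k with O => x | S j => f j end) (S n)) (f (S n))
          = Cadd x (Cadd (psum f n) (f (S n)))).
  rewrite IHn. field.
Qed.

Lemma psum_norm_le f b n : (forall k, Cnorm (f k) <= b k) -> Cnorm (psum f n) <= sum_f_R0 b n.
Proof.
  intro H. induction n; simpl; auto.
  eapply Rle_trans. apply Cnorm_add. specialize (H (S n)). lra.
Qed.

Lemma Re_psum f n : Re (psum f n) = sum_f_R0 (fun k => Re (f k)) n.
Proof. induction n; simpl; auto. rewrite IHn. auto. Qed.

Lemma Im_psum f n : Im (psum f n) = sum_f_R0 (fun k => Im (f k)) n.
Proof. induction n; simpl; auto. rewrite IHn. auto. Qed.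

Lemma series_lim_add f g l1 l2 : series_lim f l1 -> series_lim g l2 ->
  series_lim (fun k => Cadd (f k) (g k)) (Cadd l1 l2).
Proof.
  intros H1 H2. apply (Cseq_lim_ext (fun n => Cadd (psum f n) (psum g n))).
  - intro; rewrite psum_add; auto.
  - apply Cseq_lim_add; auto.
Qed.

Lemma series_lim_scal c f l : series_lim f l -> series_lim (fun k => Cmul c (f k)) (Cmul c l).
Proof.
  intros H. apply (Cseq_lim_ext (fun n => Cmul c (psum f n))).
  - intro; rewrite psum_scal; auto.
  - apply Cseq_lim_scal; auto.
Qed.

Lemma series_lim_ext f g l : (forall k, f k = g k) -> series_lim f l -> series_lim g l.
Proof. intros E H. apply (Cseq_lim_ext (psum f)); auto. intro; apply psum_ext; auto. Qed.

Lemma series_lim_shift f l : series_lim f l -> series_lim (fun k => f (S k)) (Csub l (f O)).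
Proof.
  intros H eps He. destruct (H eps He) as [N HN]. exists N. intros n Hn.
  rewrite psum_shift. replace (Csub (Csub (psum f (S n)) (f O)) (Csub l (f O)))
    with (Csub (psum f (S n)) l) by field. apply HN. lia.
Qed.

Lemma series_lim_cons x f l : series_lim f l ->
  series_lim (fun k => match k with O => x | S j => f j end) (Cadd x l).
Proof.
  intros H eps He. destruct (H eps He) as [N HN]. exists (S N). intros n Hn.
  destruct n. lia. rewrite psum_cons.
  replace (Csub (Cadd x (psum f n)) (Cadd x l)) with (Csub (psum f n) l) by field.
  apply HN. lia.
Qed.

Lemma sum_f_R0_le_Series b n : (forall k, 0 <= b k) -> ex_series b -> sum_f_R0 b n <= Series b.
Proof.
  intros Hp He. apply growing_ineq.
  - intro k. simpl. specialize (Hp (S k)). lra.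
  - apply is_series_Reals. apply Series_correct. auto.
Qed.

Lemma Series_ge0 b : (forall k, 0 <= b k) -> ex_series b -> 0 <= Series b.
Proof. intros Hp He. eapply Rle_trans; [| apply (sum_f_R0_le_Series _ 0)]; simpl; auto. Qed.

Lemma ex_series_Rabs_le (a b : nat -> R) : (forall k, Rabs (a k) <= b k) -> ex_series b -> ex_series a.
Proof. intros H. apply (@ex_series_le R_AbsRing R_CompleteNormedModule). exact H. Qed.

Lemma series_lim_of_majorant f b : (forall k, Cnorm (f k) <= b k) -> ex_series b ->
  exists l, series_lim f l.
Proof.
  intros Hb He.
  assert (HR : ex_series (fun k => Re (f k))).
  { apply (ex_series_Rabs_le _ b); auto. intro k. eapply Rle_trans; [apply Re_le_Cnorm | auto]. }
  assert (HI : ex_series (fun k => Im (f k))).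
  { apply (ex_series_Rabs_le _ b); auto. intro k. eapply Rle_trans; [apply Im_le_Cnorm | auto]. }
  apply Series_correct, is_series_Reals in HR. apply Series_correct, is_series_Reals in HI.
  exists (mkC (Series (fun k => Re (f k))) (Series (fun k => Im (f k)))).
  intros eps Heps.
  destruct (HR (eps / 2)) as [N1 H1]. lra. destruct (HI (eps / 2)) as [N2 H2]. lra.
  exists (N1 + N2)%nat. intros n Hn. eapply Rle_lt_trans. apply Cnorm_le_ReIm.
  simpl. rewrite Re_psum, Im_psum.
  specialize (H1 n ltac:(lia)). specialize (H2 n ltac:(lia)). unfold R_dist, Rminus in *. lra.
Qed.

Lemma series_lim_unique f l1 l2 : series_lim f l1 -> series_lim f l2 -> l1 = l2.
Proof. apply Cseq_lim_unique. Qed.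

Lemma Zseries_unique a l1 l2 : Zseries_lim a l1 -> Zseries_lim a l2 -> l1 = l2.
Proof.
  intros [p1 [n1 [H1 [H2 ->]]]] [p2 [n2 [H3 [H4 ->]]]].
  rewrite (series_lim_unique _ _ _ H1 H3), (series_lim_unique _ _ _ H2 H4). auto.
Qed.

Lemma Zsum_eq a l : Zseries_lim a l -> Zsum a = l.
Proof.
  intro H. unfold Zsum. apply (Zseries_unique a); auto.
  apply (epsilon_spec C_inhabited (fun l => Zseries_lim a l)). exists l; auto.
Qed.

Lemma Zseries_ext a b l : (forall n, a n = b n) -> Zseries_lim a l -> Zseries_lim b l.
Proof.
  intros E [p [q [H1 [H2 H3]]]]. exists p, q. split; [|split]; auto.
  - apply (series_lim_ext (fun k => a (Z.of_nat k))); auto.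
  - apply (series_lim_ext (fun k => a (- Z.of_nat (S k))%Z)); auto.
Qed.

Lemma Zseries_add a b la lb : Zseries_lim a la -> Zseries_lim b lb ->
  Zseries_lim (fun n => Cadd (a n) (b n)) (Cadd la lb).
Proof.
  intros [p1 [n1 [H1 [H2 ->]]]] [p2 [n2 [H3 [H4 ->]]]].
  exists (Cadd p1 p2), (Cadd n1 n2). split; [|split].
  - apply (series_lim_add (fun k => a (Z.of_nat k)) (fun k => b (Z.of_nat k))); auto.
  - apply (series_lim_add (fun k => a (- Z.of_nat (S k))%Z) (fun k => b (- Z.of_nat (S k))%Z)); auto.
  - field.
Qed.

Lemma Zseries_scal c a l : Zseries_lim a l -> Zseries_lim (fun n => Cmul c (a n)) (Cmul c l).
Proof.
  intros [p1 [n1 [H1 [H2 ->]]]]. exists (Cmul c p1), (Cmul c n1). split; [|split].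
  - apply (series_lim_scal c (fun k => a (Z.of_nat k))); auto.
  - apply (series_lim_scal c (fun k => a (- Z.of_nat (S k))%Z)); auto.
  - field.
Qed.

Lemma Zseries_of_majorant a B : (forall n, Cnorm (a n) <= B n) ->
  ex_series (fun k => B (Z.of_nat k)) -> ex_series (fun k => B (- Z.of_nat (S k))%Z) ->
  exists l, Zseries_lim a l.
Proof.
  intros H H1 H2.
  destruct (series_lim_of_majorant (fun k => a (Z.of_nat k)) _ (fun k => H _) H1) as [l1 Hl1].
  destruct (series_lim_of_majorant (fun k => a (- Z.of_nat (S k))%Z) _ (fun k => H _) H2) as [l2 Hl2].
  exists (Cadd l1 l2), l1, l2. auto.
Qed.

Lemma series_lim_C0 : series_lim (fun _ => C0) C0.
Proof.
  intros eps He. exists O. intros n _.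
  replace (psum (fun _ => C0) n) with C0 by (induction n; simpl; [| rewrite <- IHn]; field).
  replace (Csub C0 C0) with C0 by field. rewrite Cnorm_C0. auto.
Qed.

Lemma Zseries_delta x : Zseries_lim (fun n => if Z.eqb n 0 then x else C0) x.
Proof.
  exists (Cadd x C0), C0. split; [|split].
  - apply (series_lim_ext (fun k => match k with O => x | S _ => C0 end)).
    + intros [|k]; reflexivity.
    + apply series_lim_cons, series_lim_C0.
  - exact series_lim_C0.
  - field.
Qed.

Lemma Zseries_shift_pred a l : Zseries_lim a l -> Zseries_lim (fun n => a (n - 1)%Z) l.
Proof.
  intros [p [q [H1 [H2 ->]]]].
  exists (Cadd (a (-1)%Z) p), (Csub q (a (-1)%Z)). split; [|split].
  - apply (series_lim_ext (fun k => match k with O => a (-1)%Z | S j => a (Z.of_nat j) end)).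
    + intros [|k]; auto. f_equal. lia.
    + apply series_lim_cons; auto.
  - apply (series_lim_ext (fun k => a (- Z.of_nat (S (S k)))%Z)).
    + intros k. f_equal. lia.
    + exact (series_lim_shift (fun j => a (- Z.of_nat (S j))%Z) q H2).
  - field.
Qed.

Lemma Zseries_shift_succ a l : Zseries_lim a l -> Zseries_lim (fun n => a (n + 1)%Z) l.
Proof.
  intros [p [q [H1 [H2 ->]]]].
  exists (Csub p (a 0%Z)), (Cadd (a 0%Z) q). split; [|split].
  - apply (series_lim_ext (fun k => a (Z.of_nat (S k)))).
    + intros k. f_equal. lia.
    + exact (series_lim_shift (fun j => a (Z.of_nat j)) p H1).
  - apply (series_lim_ext (fun k => match k with O => a 0%Z | S j => a (- Z.of_nat (S j))%Z end)).
    + intros [|k]; f_equal; lia.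
    + apply series_lim_cons; auto.
  - field.
Qed.

Lemma Zseries_shift (lam : Z) a l : Zseries_lim a l -> Zseries_lim (fun n => a (n - lam)%Z) l.
Proof.
  revert a l. induction lam using Z.peano_ind; intros a l H.
  - eapply Zseries_ext; [|exact H]. intro; f_equal; lia.
  - apply IHlam, Zseries_shift_pred in H. eapply Zseries_ext; [|exact H]. intro; simpl; f_equal; lia.
  - apply IHlam, Zseries_shift_succ in H. eapply Zseries_ext; [|exact H]. intro; simpl; f_equal; lia.
Qed.

(** * Limits and first-order Taylor bounds *)

Lemma Clim_val f p l l' : Clim f p l -> l = l' -> Clim f p l'.
Proof. intros H <-. auto. Qed.

Lemma Clim_const c p : Clim (fun _ => c) p c.
Proof.
  intros eps He. exists 1. split. lra. intros.
  replace (Csub c c) with C0 by field. rewrite Cnorm_C0. auto.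
Qed.

Lemma Clim_add f g p l m : Clim f p l -> Clim g p m -> Clim (fun u => Cadd (f u) (g u)) p (Cadd l m).
Proof.
  intros H1 H2 eps He. destruct (H1 (eps / 2)) as [d1 [Hd1 H1']]. lra.
  destruct (H2 (eps / 2)) as [d2 [Hd2 H2']]. lra. exists (Rmin d1 d2). split.
  apply Rmin_pos; auto. intros u [Hu1 Hu2].
  replace (Csub (Cadd (f u) (g u)) (Cadd l m)) with (Cadd (Csub (f u) l) (Csub (g u) m)) by field.
  eapply Rle_lt_trans. apply Cnorm_add.
  pose proof (Rmin_l d1 d2). pose proof (Rmin_r d1 d2).
  specialize (H1' u ltac:(lra)). specialize (H2' u ltac:(lra)). lra.
Qed.

Lemma Clim_mul f g p l m : Clim f p l -> Clim g p m -> Clim (fun u => Cmul (f u) (g u)) p (Cmul l m).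
Proof.
  intros H1 H2 eps He.
  pose proof (Cnorm_ge0 l). pose proof (Cnorm_ge0 m).
  set (A := 1 + Cnorm l + Cnorm m). assert (HA : 1 <= A) by (unfold A; lra).
  set (e1 := Rmin 1 (eps / A)).
  assert (He1 : 0 < e1) by (apply Rmin_pos; [lra | apply Rdiv_lt_0_compat; lra]).
  assert (e1 <= 1) by apply Rmin_l.
  assert (e1 * A <= eps) by (apply Rmin_div_mul_le; lra).
  destruct (H1 e1) as [d1 [Hd1 H1']]. auto. destruct (H2 e1) as [d2 [Hd2 H2']]. auto.
  exists (Rmin d1 d2). split. apply Rmin_pos; auto. intros u [Hu1 Hu2].
  pose proof (Rmin_l d1 d2). pose proof (Rmin_r d1 d2).
  specialize (H1' u ltac:(lra)). specialize (H2' u ltac:(lra)).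
  replace (Csub (Cmul (f u) (g u)) (Cmul l m)) with
    (Cadd (Cmul (Csub (f u) l) (Csub (g u) m))
          (Cadd (Cmul l (Csub (g u) m)) (Cmul m (Csub (f u) l)))) by field.
  eapply Rle_lt_trans. apply Cnorm_add. eapply Rle_lt_trans. apply Rplus_le_compat_l. apply Cnorm_add.
  rewrite !Cnorm_mul.
  pose proof (Cnorm_ge0 (Csub (f u) l)). pose proof (Cnorm_ge0 (Csub (g u) m)).
  set (x := Cnorm (Csub (f u) l)) in *. set (y := Cnorm (Csub (g u) m)) in *.
  assert (x * y <= x) by nra.
  assert (Cnorm l * y <= Cnorm l * e1) by (apply Rmult_le_compat_l; lra).
  assert (Cnorm m * x <= Cnorm m * e1) by (apply Rmult_le_compat_l; lra).
  assert (e1 * A = e1 + Cnorm l * e1 + Cnorm m * e1) by (unfold A; ring).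
  lra.
Qed.

Lemma Clim_inv g p m : m <> C0 -> Clim g p m -> Clim (fun u => Cinv (g u)) p (Cinv m).
Proof.
  intros Hm H eps He. pose proof (Cnorm_gt0 m Hm) as Hnm.
  set (e1 := Rmin (Cnorm m / 2) (eps * (Cnorm m * Cnorm m) / 2)).
  assert (He1 : 0 < e1).
  { apply Rmin_pos; [lra | apply Rdiv_lt_0_compat; [apply Rmult_lt_0_compat; nra | lra]]. }
  destruct (H e1 He1) as [d [Hd H']]. exists d. split; auto. intros u Hu. specialize (H' u Hu).
  assert (e1 <= Cnorm m / 2) by apply Rmin_l. assert (e1 <= eps * (Cnorm m * Cnorm m) / 2) by apply Rmin_r.
  pose proof (Cnorm_sub_ge m (g u)). rewrite Cnorm_sub_sym in H'.
  assert (Hg : Cnorm m / 2 <= Cnorm (g u)) by lra.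
  assert (g u <> C0) by (apply Cnorm_neq0; lra).
  replace (Csub (Cinv (g u)) (Cinv m)) with (Cdiv (Csub m (g u)) (Cmul (g u) m)) by (field; auto).
  rewrite Cnorm_div, Cnorm_mul.
  apply (Rmult_lt_reg_r (Cnorm (g u) * Cnorm m)). nra.
  unfold Rdiv. rewrite Rmult_assoc, Rinv_l by nra.
  assert (eps * (Cnorm m * Cnorm m) / 2 <= eps * (Cnorm (g u) * Cnorm m)).
  { unfold Rdiv. rewrite Rmult_assoc. apply Rmult_le_compat_l. lra. nra. }
  lra.
Qed.

Lemma Clim_ext f g p l r : 0 < r -> (forall u, 0 < Cnorm (Csub u p) < r -> f u = g u) ->
  Clim f p l -> Clim g p l.
Proof.
  intros Hr E H eps He. destruct (H eps He) as [d [Hd H']]. exists (Rmin d r). split.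
  apply Rmin_pos; auto. intros u [Hu1 Hu2]. pose proof (Rmin_l d r). pose proof (Rmin_r d r).
  rewrite <- E by lra. apply H'. lra.
Qed.

Lemma Clim_shift f p c l : Clim f p l -> Clim (fun u => f (Csub u c)) (Cadd p c) l.
Proof.
  intros H eps He. destruct (H eps He) as [d [Hd H']]. exists d. split; auto.
  intros u Hu. apply H'. replace (Csub (Csub u c) p) with (Csub u (Cadd p c)) by field. auto.
Qed.

Lemma Clim_mul_sub_bounded g p B r : 0 < r ->
  (forall u, 0 < Cnorm (Csub u p) < r -> Cnorm (g u) <= B) ->
  Clim (fun u => Cmul (Csub u p) (g u)) p C0.
Proof.
  intros Hr Hb eps He. pose proof (Rabs_pos B). pose proof (Rle_abs B).
  set (d := Rmin r (eps / (Rabs B + 1))).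
  assert (Hd : 0 < d) by (apply Rmin_pos; auto; apply Rdiv_lt_0_compat; lra).
  assert (Hde : d * (Rabs B + 1) <= eps) by (apply Rmin_div_mul_le; lra).
  exists d. split; auto. intros u [Hu1 Hu2]. assert (d <= r) by apply Rmin_l.
  replace (Csub (Cmul (Csub u p) (g u)) C0) with (Cmul (Csub u p) (g u)) by field.
  rewrite Cnorm_mul. specialize (Hb u ltac:(lra)). pose proof (Cnorm_ge0 (g u)).
  assert (Cnorm (Csub u p) * Cnorm (g u) <= Cnorm (Csub u p) * (Rabs B + 1))
    by (apply Rmult_le_compat_l; [apply Cnorm_ge0 | lra]).
  nra.
Qed.

Definition taylor_bound (f : Cplx -> Cplx) (w d : Cplx) (K r : R) : Prop :=
  forall u, Cnorm (Csub u w) < r ->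
    Cnorm (Csub (Csub (f u) (f w)) (Cmul d (Csub u w))) <= K * (Cnorm (Csub u w) * Cnorm (Csub u w)).

Lemma taylor_bound_lipschitz f w d K r u : 0 <= K -> taylor_bound f w d K r -> Cnorm (Csub u w) < r ->
  Cnorm (Csub (f u) (f w)) <= (Cnorm d + K * r) * Cnorm (Csub u w).
Proof.
  intros HK H Hu. specialize (H u Hu).
  replace (Csub (f u) (f w))
    with (Cadd (Csub (Csub (f u) (f w)) (Cmul d (Csub u w))) (Cmul d (Csub u w))) by field.
  eapply Rle_trans. apply Cnorm_add. rewrite Cnorm_mul.
  pose proof (Cnorm_ge0 (Csub u w)).
  assert (K * (Cnorm (Csub u w) * Cnorm (Csub u w)) <= K * r * Cnorm (Csub u w)).
  { rewrite Rmult_assoc. apply Rmult_le_compat_l; auto. apply Rmult_le_compat_r; lra. }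
  lra.
Qed.

Lemma taylor_bound_norm_le f w d K r u : 0 <= K -> taylor_bound f w d K r -> Cnorm (Csub u w) < r ->
  Cnorm (f u) <= Cnorm (f w) + (Cnorm d + K * r) * r.
Proof.
  intros HK H Hu. pose proof (taylor_bound_lipschitz f w d K r u HK H Hu).
  pose proof (Cnorm_sub_ge (f u) (f w)). pose proof (Cnorm_ge0 d). pose proof (Cnorm_ge0 (Csub u w)).
  assert ((Cnorm d + K * r) * Cnorm (Csub u w) <= (Cnorm d + K * r) * r)
    by (apply Rmult_le_compat_l; nra).
  lra.
Qed.

Lemma taylor_bound_Clim f w d K r : 0 <= K -> 0 < r -> taylor_bound f w d K r -> Clim f w (f w).
Proof.
  intros HK Hr H eps He. pose proof (Cnorm_ge0 d). set (L := Cnorm d + K * r + 1).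
  assert (HL : 0 < L) by (unfold L; nra).
  set (dl := Rmin r (eps / L)).
  assert (Hdl : dl * L <= eps) by (apply Rmin_div_mul_le; lra).
  exists dl. split. apply Rmin_pos; auto. apply Rdiv_lt_0_compat; auto.
  intros u [Hu1 Hu2]. assert (dl <= r) by apply Rmin_l.
  pose proof (taylor_bound_lipschitz f w d K r u HK H ltac:(lra)).
  assert (Cnorm (Csub u w) * L < dl * L) by (apply Rmult_lt_compat_r; lra).
  assert ((Cnorm d + K * r) * Cnorm (Csub u w) <= Cnorm (Csub u w) * L)
    by (unfold L; pose proof (Cnorm_ge0 (Csub u w)); nra).
  lra.
Qed.

Lemma taylor_bound_derivative f w d K r : 0 <= K -> 0 < r -> taylor_bound f w d K r ->
  Clim (fun u => Cdiv (Csub (f u) (f w)) (Csub u w)) w d.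
Proof.
  intros HK Hr H eps He.
  set (dl := Rmin r (eps / (K + 1))).
  assert (Hdl : dl * (K + 1) <= eps) by (apply Rmin_div_mul_le; lra).
  exists dl. split. apply Rmin_pos; auto. apply Rdiv_lt_0_compat; lra.
  intros u [Hu1 Hu2]. assert (dl <= r) by apply Rmin_l.
  specialize (H u ltac:(lra)). pose proof (Cnorm_neq0 _ Hu1) as Hz.
  replace (Csub (Cdiv (Csub (f u) (f w)) (Csub u w)) d) with
    (Cdiv (Csub (Csub (f u) (f w)) (Cmul d (Csub u w))) (Csub u w)) by (field; auto).
  rewrite Cnorm_div. apply (Rmult_lt_reg_r (Cnorm (Csub u w))); auto.
  unfold Rdiv. rewrite Rmult_assoc, Rinv_l, Rmult_1_r by lra.
  assert (Cnorm (Csub u w) * (K + 1) < dl * (K + 1)) by (apply Rmult_lt_compat_r; lra).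
  nra.
Qed.

Lemma taylor_bound_differentiable f w d K r : 0 <= K -> 0 < r -> taylor_bound f w d K r ->
  C_differentiable_at f w.
Proof. intros. exists d. eapply taylor_bound_derivative; eauto. Qed.

Lemma taylor_bound_ext f g w d K r : (forall u, f u = g u) -> taylor_bound f w d K r ->
  taylor_bound g w d K r.
Proof. intros E H u Hu. rewrite <- !E. auto. Qed.

Lemma taylor_bound_const c w r : taylor_bound (fun _ => c) w C0 0 r.
Proof.
  intros u Hu. replace (Csub (Csub c c) (Cmul C0 (Csub u w))) with C0 by field.
  rewrite Cnorm_C0. lra.
Qed.

Lemma taylor_bound_add f g w d1 d2 K1 K2 r : taylor_bound f w d1 K1 r -> taylor_bound g w d2 K2 r ->
  taylor_bound (fun u => Cadd (f u) (g u)) w (Cadd d1 d2) (K1 + K2) r.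
Proof.
  intros H1 H2 u Hu. specialize (H1 u Hu). specialize (H2 u Hu).
  replace (Csub (Csub (Cadd (f u) (g u)) (Cadd (f w) (g w))) (Cmul (Cadd d1 d2) (Csub u w))) with
    (Cadd (Csub (Csub (f u) (f w)) (Cmul d1 (Csub u w)))
          (Csub (Csub (g u) (g w)) (Cmul d2 (Csub u w)))) by field.
  eapply Rle_trans. apply Cnorm_add. lra.
Qed.

Lemma taylor_bound_scal c f w d K r : taylor_bound f w d K r ->
  taylor_bound (fun u => Cmul c (f u)) w (Cmul c d) (Cnorm c * K) r.
Proof.
  intros H u Hu. specialize (H u Hu).
  replace (Csub (Csub (Cmul c (f u)) (Cmul c (f w))) (Cmul (Cmul c d) (Csub u w))) with
    (Cmul c (Csub (Csub (f u) (f w)) (Cmul d (Csub u w)))) by field.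
  rewrite Cnorm_mul, Rmult_assoc. apply Rmult_le_compat_l; auto. apply Cnorm_ge0.
Qed.

Definition taylor_mul_coef (K1 K2 n1 n2 fw gw r : R) :=
  K1 * gw + fw * K2 + (n1 + K1 * r) * (n2 + K2 * r).

Lemma taylor_mul_coef_ge0 K1 K2 n1 n2 a b r : 0 <= K1 -> 0 <= K2 -> 0 <= n1 -> 0 <= n2 ->
  0 <= a -> 0 <= b -> 0 <= r -> 0 <= taylor_mul_coef K1 K2 n1 n2 a b r.
Proof.
  intros. unfold taylor_mul_coef.
  assert (0 <= (n1 + K1 * r) * (n2 + K2 * r)) by (apply Rmult_le_pos; nra). nra.
Qed.

Lemma taylor_bound_mul f g w d1 d2 K1 K2 r : 0 <= K1 -> 0 <= K2 ->
  taylor_bound f w d1 K1 r -> taylor_bound g w d2 K2 r ->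
  taylor_bound (fun u => Cmul (f u) (g u)) w (Cadd (Cmul d1 (g w)) (Cmul (f w) d2))
     (taylor_mul_coef K1 K2 (Cnorm d1) (Cnorm d2) (Cnorm (f w)) (Cnorm (g w)) r) r.
Proof.
  intros HK1 HK2 H1 H2 u Hu.
  pose proof (taylor_bound_lipschitz f w d1 K1 r u HK1 H1 Hu) as L1.
  pose proof (taylor_bound_lipschitz g w d2 K2 r u HK2 H2 Hu) as L2.
  specialize (H1 u Hu). specialize (H2 u Hu).
  set (h := Csub u w) in *.
  replace (Csub (Csub (Cmul (f u) (g u)) (Cmul (f w) (g w))) (Cmul (Cadd (Cmul d1 (g w)) (Cmul (f w) d2)) h))
    with (Cadd (Cmul (Csub (Csub (f u) (f w)) (Cmul d1 h)) (g w))
           (Cadd (Cmul (f w) (Csub (Csub (g u) (g w)) (Cmul d2 h)))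
                 (Cmul (Csub (f u) (f w)) (Csub (g u) (g w))))) by (unfold h; field).
  eapply Rle_trans. apply Cnorm_add. eapply Rle_trans. apply Rplus_le_compat_l. apply Cnorm_add.
  rewrite !Cnorm_mul. unfold taylor_mul_coef.
  pose proof (Cnorm_ge0 (g w)). pose proof (Cnorm_ge0 (f w)). pose proof (Cnorm_ge0 h).
  pose proof (Cnorm_ge0 d1). pose proof (Cnorm_ge0 d2).
  assert (Cnorm (Csub (Csub (f u) (f w)) (Cmul d1 h)) * Cnorm (g w) <= K1 * (Cnorm h * Cnorm h) * Cnorm (g w))
    by (apply Rmult_le_compat_r; auto).
  assert (Cnorm (f w) * Cnorm (Csub (Csub (g u) (g w)) (Cmul d2 h)) <= Cnorm (f w) * (K2 * (Cnorm h * Cnorm h)))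
    by (apply Rmult_le_compat_l; auto).
  assert (Cnorm (Csub (f u) (f w)) * Cnorm (Csub (g u) (g w)) <=
          ((Cnorm d1 + K1 * r) * Cnorm h) * ((Cnorm d2 + K2 * r) * Cnorm h))
    by (apply Rmult_le_compat; auto using Cnorm_ge0).
  nra.
Qed.

Definition taylor_inv_coef (K n dl r : R) := K / (dl * dl) + n * (n + K * r) / (dl * dl * dl).

Lemma taylor_bound_inv g w d K r dl : 0 <= K -> 0 < dl -> 0 < r ->
  (forall u, Cnorm (Csub u w) < r -> dl <= Cnorm (g u)) ->
  taylor_bound g w d K r ->
  taylor_bound (fun u => Cinv (g u)) w (Copp (Cmul d (Cinv (Cmul (g w) (g w)))))
    (taylor_inv_coef K (Cnorm d) dl r) r.
Proof.
  intros HK Hdl Hr Hlow H u Hu.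
  pose proof (taylor_bound_lipschitz g w d K r u HK H Hu) as L. specialize (H u Hu).
  pose proof (Hlow u Hu) as Hgu. pose proof (Hlow w (Cnorm_sub_diag w r Hr)) as Hgw.
  assert (Nu : g u <> C0) by (apply Cnorm_neq0; lra).
  assert (Nw : g w <> C0) by (apply Cnorm_neq0; lra).
  set (h := Csub u w) in *.
  replace (Csub (Csub (Cinv (g u)) (Cinv (g w))) (Cmul (Copp (Cmul d (Cinv (Cmul (g w) (g w))))) h))
    with (Cadd (Copp (Cdiv (Csub (Csub (g u) (g w)) (Cmul d h)) (Cmul (g u) (g w))))
               (Cdiv (Cmul (Cmul d h) (Csub (g u) (g w))) (Cmul (g u) (Cmul (g w) (g w)))))
    by (field; auto).
  eapply Rle_trans. apply Cnorm_add. rewrite Cnorm_opp, !Cnorm_div, !Cnorm_mul.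
  pose proof (Cnorm_ge0 h). pose proof (Cnorm_ge0 d).
  pose proof (Cnorm_ge0 (Csub (g u) (g w))). pose proof (Cnorm_ge0 (Csub (Csub (g u) (g w)) (Cmul d h))).
  set (x := Cnorm h) in *. set (a := Cnorm (g u)) in *. set (b := Cnorm (g w)) in *.
  unfold taylor_inv_coef. rewrite Rmult_plus_distr_r.
  apply Rplus_le_compat.
  - replace (K / (dl * dl) * (x * x)) with (K * (x * x) / (dl * dl)) by (field; lra).
    apply Rdiv_le_compat; split; [nra | exact H | nra | apply Rmult_le_compat; lra].
  - replace (Cnorm d * (Cnorm d + K * r) / (dl * dl * dl) * (x * x))
      with (Cnorm d * x * ((Cnorm d + K * r) * x) / (dl * dl * dl)) by (field; lra).
    assert (dl * dl <= b * b) by (apply Rmult_le_compat; lra).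
    assert (0 <= Cnorm d * x) by (apply Rmult_le_pos; lra).
    apply Rdiv_le_compat; split.
    + apply Rmult_le_pos; lra.
    + apply Rmult_le_compat_l; lra.
    + repeat apply Rmult_lt_0_compat; lra.
    + replace (dl * dl * dl) with (dl * (dl * dl)) by ring. apply Rmult_le_compat; nra.
Qed.

Lemma taylor_bound_Cexp a w r : 0 <= r ->
  taylor_bound (fun u => Cexp (Cmul a u)) w (Cmul a (Cexp (Cmul a w)))
    (Cnorm (Cexp (Cmul a w)) * Cexp_rem_coef (Cnorm a * r) * (Cnorm a * Cnorm a)) r.
Proof.
  intros Hr u Hu. set (h := Csub u w) in *.
  replace (Csub (Csub (Cexp (Cmul a u)) (Cexp (Cmul a w))) (Cmul (Cmul a (Cexp (Cmul a w))) h))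
    with (Cmul (Cexp (Cmul a w)) (Csub (Csub (Cexp (Cmul a h)) C1) (Cmul a h))).
  2: { replace (Cmul a u) with (Cadd (Cmul a w) (Cmul a h)) by (unfold h; field).
       rewrite Cexp_add. field. }
  rewrite Cnorm_mul. pose proof (Cexp_sub1_sub_le (Cmul a h)) as Hrem. rewrite Cnorm_mul in Hrem.
  pose proof (Cnorm_ge0 a). pose proof (Cnorm_ge0 h). pose proof (Cnorm_ge0 (Cexp (Cmul a w))).
  assert (Cexp_rem_coef (Cnorm a * Cnorm h) <= Cexp_rem_coef (Cnorm a * r))
    by (apply Cexp_rem_coef_le; apply Rmult_le_compat_l; lra).
  pose proof (Cexp_rem_coef_ge0 (Cnorm a * Cnorm h) ltac:(nra)).
  assert (Cexp_rem_coef (Cnorm a * Cnorm h) * (Cnorm a * Cnorm h * (Cnorm a * Cnorm h)) <=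
          Cexp_rem_coef (Cnorm a * r) * (Cnorm a * Cnorm a) * (Cnorm h * Cnorm h)).
  { replace (Cnorm a * Cnorm h * (Cnorm a * Cnorm h)) with ((Cnorm a * Cnorm a) * (Cnorm h * Cnorm h)) by ring.
    rewrite <- Rmult_assoc. apply Rmult_le_compat_r. nra. apply Rmult_le_compat_r; nra. }
  eapply Rle_trans. apply Rmult_le_compat_l. auto. eapply Rle_trans. apply Hrem. apply H4.
  right; ring.
Qed.

Lemma taylor_bound_Cexp_coef_ge0 a w r : 0 <= r ->
  0 <= Cnorm (Cexp (Cmul a w)) * Cexp_rem_coef (Cnorm a * r) * (Cnorm a * Cnorm a).
Proof.
  intro Hr. pose proof (Cnorm_ge0 a). pose proof (Cnorm_ge0 (Cexp (Cmul a w))).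
  pose proof (Cexp_rem_coef_ge0 (Cnorm a * r) ltac:(nra)).
  apply Rmult_le_pos; [apply Rmult_le_pos |]; nra.
Qed.

Lemma Clim_Cexp a w : Clim (fun u => Cexp (Cmul a u)) w (Cexp (Cmul a w)).
Proof.
  eapply (taylor_bound_Clim (fun u => Cexp (Cmul a u)) w _ _ 1);
    [apply taylor_bound_Cexp_coef_ge0 | | apply taylor_bound_Cexp]; lra.
Qed.

Lemma Clim_e c0 c1 w : Clim (fun v => e (Cadd c0 (Cmul c1 v))) w (e (Cadd c0 (Cmul c1 w))).
Proof.
  assert (E : forall v, e (Cadd c0 (Cmul c1 v)) = Cmul (e c0) (Cexp (Cmul (Cmul (mkC 0 (2 * PI)) c1) v)))
    by (intro; rewrite e_add; f_equal; unfold e; f_equal; field).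
  apply (Clim_ext (fun v => Cmul (e c0) (Cexp (Cmul (Cmul (mkC 0 (2 * PI)) c1) v))) _ _ _ 1); [lra | auto |].
  rewrite E. apply Clim_mul. apply Clim_const. apply Clim_Cexp.
Qed.

(** * Families of at most exponential growth in |n| *)

Definition exp_growth (f : Z -> R) : Prop :=
  exists C A, 0 <= C /\ 1 <= A /\ forall n, Rabs (f n) <= C * A ^ Z.abs_nat n.

Definition exp_growthC (f : Z -> Cplx) : Prop := exp_growth (fun n => Cnorm (f n)).

Lemma exp_growth_const c : exp_growth (fun _ => c).
Proof. exists (Rabs c), 1. split. apply Rabs_pos. split. lra. intro. rewrite pow1. lra. Qed.

Lemma exp_growth_le f g : (forall n, Rabs (g n) <= Rabs (f n)) -> exp_growth f -> exp_growth g.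
Proof.
  intros H [C [A [H1 [H2 H3]]]]. exists C, A. repeat split; auto.
  intro n. eapply Rle_trans; eauto.
Qed.

Lemma exp_growth_nonneg_le f g : (forall n, 0 <= g n <= f n) -> exp_growth f -> exp_growth g.
Proof. intros H. apply exp_growth_le. intro n. specialize (H n). rewrite !Rabs_right; lra. Qed.

Lemma exp_growth_add f g : exp_growth f -> exp_growth g -> exp_growth (fun n => f n + g n).
Proof.
  intros [C1 [A1 [H1 [H2 H3]]]] [C2 [A2 [H4 [H5 H6]]]].
  exists (C1 + C2), (Rmax A1 A2). split. lra. split. eapply Rle_trans; [|apply Rmax_l]. auto.
  intro n. eapply Rle_trans. apply Rabs_triang.
  pose proof (pow_incr A1 (Rmax A1 A2) (Z.abs_nat n) ltac:(split; [lra | apply Rmax_l])).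
  pose proof (pow_incr A2 (Rmax A1 A2) (Z.abs_nat n) ltac:(split; [lra | apply Rmax_r])).
  specialize (H3 n). specialize (H6 n).
  assert (C1 * A1 ^ Z.abs_nat n <= C1 * Rmax A1 A2 ^ Z.abs_nat n) by (apply Rmult_le_compat_l; auto).
  assert (C2 * A2 ^ Z.abs_nat n <= C2 * Rmax A1 A2 ^ Z.abs_nat n) by (apply Rmult_le_compat_l; auto).
  lra.
Qed.

Lemma exp_growth_mul f g : exp_growth f -> exp_growth g -> exp_growth (fun n => f n * g n).
Proof.
  intros [C1 [A1 [H1 [H2 H3]]]] [C2 [A2 [H4 [H5 H6]]]].
  exists (C1 * C2), (A1 * A2). split. nra. split. nra.
  intro n. rewrite Rabs_mult, Rpow_mult_distr.
  replace (C1 * C2 * (A1 ^ Z.abs_nat n * A2 ^ Z.abs_nat n)) with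
     ((C1 * A1 ^ Z.abs_nat n) * (C2 * A2 ^ Z.abs_nat n)) by ring.
  apply Rmult_le_compat; auto using Rabs_pos.
Qed.

Lemma exp_growth_pow B : 0 <= B -> exp_growth (fun n => B ^ Z.abs_nat n).
Proof.
  intro HB. exists 1, (Rmax 1 B). split. lra. split. apply Rmax_l. intro n.
  rewrite Rabs_right, Rmult_1_l.
  - apply pow_incr. split; auto. apply Rmax_r.
  - apply Rle_ge, pow_le; auto.
Qed.

Lemma exp_mult_INR x k : exp (INR k * x) = exp x ^ k.
Proof.
  induction k. simpl. rewrite Rmult_0_l. apply exp_0.
  rewrite S_INR. simpl. rewrite <- IHk, <- exp_plus. f_equal. ring.
Qed.

Lemma IZR_Zabs_INR n : IZR (Z.abs n) = INR (Z.abs_nat n).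
Proof. rewrite INR_IZR_INZ, Zabs2Nat.id_abs. auto. Qed.

Lemma exp_growth_exp a b : 0 <= a -> exp_growth (fun n => exp (a * IZR (Z.abs n) + b)).
Proof.
  intro Ha. apply (exp_growth_le (fun n => exp b * (exp a ^ Z.abs_nat n))).
  - intro n. right. f_equal. rewrite exp_plus, IZR_Zabs_INR, (Rmult_comm a), exp_mult_INR. ring.
  - apply exp_growth_mul. apply exp_growth_const. apply exp_growth_pow. left; apply exp_pos.
Qed.

Lemma exp_growth_Zabs : exp_growth (fun n => IZR (Z.abs n)).
Proof.
  apply (exp_growth_le (fun n => 2 ^ Z.abs_nat n)). 2: apply exp_growth_pow; lra.
  assert (Hpow : forall k, INR k <= 2 ^ k).
  { induction k. simpl; lra. rewrite S_INR. simpl.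
    assert (1 <= 2 ^ k) by (apply pow_R1_Rle; lra). lra. }
  intro n. rewrite IZR_Zabs_INR, !Rabs_right.
  - apply Hpow.
  - apply Rle_ge, pow_le; lra.
  - apply Rle_ge, pos_INR.
Qed.

Lemma exp_growthC_const c : exp_growthC (fun _ => c).
Proof. apply (exp_growth_const (Cnorm c)). Qed.

Lemma exp_growthC_add f g : exp_growthC f -> exp_growthC g -> exp_growthC (fun n => Cadd (f n) (g n)).
Proof.
  intros H1 H2. apply (exp_growth_nonneg_le (fun n => Cnorm (f n) + Cnorm (g n))).
  - intro; split. apply Cnorm_ge0. apply Cnorm_add.
  - apply exp_growth_add; auto.
Qed.

Lemma exp_growthC_mul f g : exp_growthC f -> exp_growthC g -> exp_growthC (fun n => Cmul (f n) (g n)).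
Proof.
  intros H1 H2. apply (exp_growth_nonneg_le (fun n => Cnorm (f n) * Cnorm (g n))).
  - intro; rewrite Cnorm_mul; split; [apply Rmult_le_pos; apply Cnorm_ge0 | lra].
  - apply exp_growth_mul; auto.
Qed.

Lemma exp_growthC_opp f : exp_growthC f -> exp_growthC (fun n => Copp (f n)).
Proof. apply exp_growth_le. intro n. rewrite Cnorm_opp. lra. Qed.

Lemma exp_growthC_inv f dl : 0 < dl -> (forall n, dl <= Cnorm (f n)) -> exp_growthC (fun n => Cinv (f n)).
Proof.
  intros Hd H. apply (exp_growth_nonneg_le (fun _ => / dl)); [| apply exp_growth_const].
  intro n. rewrite Cnorm_inv. specialize (H n). split.
  - left; apply Rinv_0_lt_compat; lra.
  - apply Rinv_le_contravar; lra.
Qed.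

Lemma exp_growthC_le f g : (forall n, Cnorm (g n) <= Cnorm (f n)) -> exp_growthC f -> exp_growthC g.
Proof.
  intro H. apply exp_growth_le. intro n.
  rewrite !Rabs_right by (apply Rle_ge, Cnorm_ge0). apply H.
Qed.

Ltac exp_growth_tac :=
  repeat first [ assumption | apply exp_growthC_const | apply exp_growthC_add
               | apply exp_growthC_mul | apply exp_growthC_opp | apply exp_growth_const
               | apply exp_growth_add | apply exp_growth_mul ].

(** * Families of first-order Taylor bounds *)

Definition taylor_family (f : Z -> Cplx -> Cplx) (w : Cplx) (r : R) : Prop :=
  exists (d : Z -> Cplx) (K : Z -> R),
    (forall n, taylor_bound (f n) w (d n) (K n) r) /\ (forall n, 0 <= K n) /\
    exp_growthC d /\ exp_growth K /\ exp_growthC (fun n => f n w).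

Lemma taylor_family_ext f g w r : (forall n u, f n u = g n u) -> taylor_family f w r ->
  taylor_family g w r.
Proof.
  intros E [d [K [H1 [H2 [H3 [H4 H5]]]]]]. exists d, K. repeat split; auto.
  - intro n. apply (taylor_bound_ext (f n)); auto.
  - eapply exp_growth_le; [| exact H5]. intro n. simpl. rewrite E. lra.
Qed.

Lemma taylor_family_const c w r : exp_growthC c -> taylor_family (fun n _ => c n) w r.
Proof.
  intro Hc. exists (fun _ => C0), (fun _ => 0). repeat split; auto.
  - intro n. apply taylor_bound_const.
  - intro; lra.
  - apply exp_growthC_const.
  - apply exp_growth_const.
Qed.

Lemma taylor_family_add f g w r : taylor_family f w r -> taylor_family g w r ->
  taylor_family (fun n u => Cadd (f n u) (g n u)) w r.
Proof.
  intros [d1 [K1 [H1 [P1 [D1 [G1 V1]]]]]] [d2 [K2 [H2 [P2 [D2 [G2 V2]]]]]].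
  exists (fun n => Cadd (d1 n) (d2 n)), (fun n => K1 n + K2 n). repeat split.
  - intro n. apply taylor_bound_add; auto.
  - intro n. specialize (P1 n). specialize (P2 n). lra.
  - exp_growth_tac.
  - exp_growth_tac.
  - exp_growth_tac.
Qed.

Lemma taylor_family_mul f g w r : 0 <= r -> taylor_family f w r -> taylor_family g w r ->
  taylor_family (fun n u => Cmul (f n u) (g n u)) w r.
Proof.
  intros Hr [d1 [K1 [H1 [P1 [D1 [G1 V1]]]]]] [d2 [K2 [H2 [P2 [D2 [G2 V2]]]]]].
  exists (fun n => Cadd (Cmul (d1 n) (g n w)) (Cmul (f n w) (d2 n))),
         (fun n => taylor_mul_coef (K1 n) (K2 n) (Cnorm (d1 n)) (Cnorm (d2 n))
                     (Cnorm (f n w)) (Cnorm (g n w)) r).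
  repeat split.
  - intro n. apply taylor_bound_mul; auto.
  - intro n. apply taylor_mul_coef_ge0; auto using Cnorm_ge0.
  - exp_growth_tac.
  - unfold taylor_mul_coef. exp_growth_tac.
  - exp_growth_tac.
Qed.

Lemma taylor_family_inv g w r dl : 0 < r -> 0 < dl ->
  (forall n u, Cnorm (Csub u w) < r -> dl <= Cnorm (g n u)) -> taylor_family g w r ->
  taylor_family (fun n u => Cinv (g n u)) w r.
Proof.
  intros Hr Hdl Hlow [d [K [H [P [D [G V]]]]]].
  assert (Hw : forall n, dl <= Cnorm (g n w)) by (intro n; apply Hlow, Cnorm_sub_diag; auto).
  assert (Hinv : exp_growthC (fun n => Cinv (g n w))) by (apply (exp_growthC_inv _ dl); auto).
  exists (fun n => Copp (Cmul (d n) (Cinv (Cmul (g n w) (g n w))))),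
         (fun n => taylor_inv_coef (K n) (Cnorm (d n)) dl r).
  repeat split.
  - intro n. apply taylor_bound_inv; auto.
  - intro n. unfold taylor_inv_coef, Rdiv. pose proof (P n). pose proof (Cnorm_ge0 (d n)).
    assert (0 <= K n * r) by nra. assert (0 < dl * dl) by nra. assert (0 < dl * dl * dl) by nra.
    apply Rplus_le_le_0_compat; apply Rmult_le_pos;
      try (left; apply Rinv_0_lt_compat; lra); nra.
  - apply (exp_growthC_le (fun n => Copp (Cmul (d n) (Cmul (Cinv (g n w)) (Cinv (g n w)))))).
    + intro n. cbv beta. rewrite Cinv_mul. lra.
    + exp_growth_tac.
  - unfold taylor_inv_coef, Rdiv. exp_growth_tac.
  - exact Hinv.
Qed.

Lemma exp_growth_exp_le (g : Z -> R) B : 0 <= B -> (forall n, g n <= B * (1 + IZR (Z.abs n))) ->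
  exp_growth (fun n => exp (g n)).
Proof.
  intros HB Hg. apply (exp_growth_nonneg_le (fun n => exp (B * IZR (Z.abs n) + B))).
  - intro n. split. left; apply exp_pos. apply exp_le_exp. specialize (Hg n). lra.
  - apply exp_growth_exp; auto.
Qed.

Lemma taylor_family_Cexp (a : Z -> Cplx) B w r : 0 <= B -> 0 <= r ->
  (forall n, Cnorm (a n) <= B * (1 + IZR (Z.abs n))) ->
  taylor_family (fun n u => Cexp (Cmul (a n) u)) w r.
Proof.
  intros HB Hr Ha.
  assert (Gn : exp_growthC a).
  { apply (exp_growth_le (fun n => B + B * IZR (Z.abs n))).
    - intro n. rewrite (Rabs_right (Cnorm _)) by (apply Rle_ge, Cnorm_ge0).
      eapply Rle_trans; [| apply Rle_abs]. specialize (Ha n). lra.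
    - apply exp_growth_add. apply exp_growth_const. apply exp_growth_mul.
      apply exp_growth_const. apply exp_growth_Zabs. }
  assert (Ge : forall s, 0 <= s -> exp_growth (fun n => exp (Cnorm (a n) * s))).
  { intros s Hs. apply (exp_growth_exp_le _ (B * s)); [nra |].
    intro n. specialize (Ha n). replace (B * s * (1 + IZR (Z.abs n))) with (B * (1 + IZR (Z.abs n)) * s) by ring.
    apply Rmult_le_compat_r; auto. }
  exists (fun n => Cmul (a n) (Cexp (Cmul (a n) w))),
         (fun n => Cnorm (Cexp (Cmul (a n) w)) * Cexp_rem_coef (Cnorm (a n) * r) * (Cnorm (a n) * Cnorm (a n))).
  assert (Gw : exp_growthC (fun n => Cexp (Cmul (a n) w))).
  { apply (exp_growth_nonneg_le (fun n => exp (Cnorm (a n) * Cnorm w))); [| apply Ge, Cnorm_ge0].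
    intro n. rewrite Cnorm_Cexp. split. left; apply exp_pos. apply exp_le_exp.
    rewrite <- Cnorm_mul. eapply Rle_trans; [apply Rle_abs | apply Re_le_Cnorm]. }
  repeat split.
  - intro n. apply taylor_bound_Cexp; auto.
  - intro n. apply taylor_bound_Cexp_coef_ge0; auto.
  - exp_growth_tac.
  - unfold Cexp_rem_coef. exp_growth_tac. apply Ge; auto.
  - exact Gw.
Qed.

Lemma taylor_family_select (P : Z -> bool) f g w r : taylor_family f w r -> taylor_family g w r ->
  taylor_family (fun n => if P n then f n else g n) w r.
Proof.
  intros [d1 [K1 [H1 [P1 [D1 [G1 V1]]]]]] [d2 [K2 [H2 [P2 [D2 [G2 V2]]]]]].
  exists (fun n => if P n then d1 n else d2 n), (fun n => if P n then K1 n else K2 n).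
  repeat split.
  - intro n. destruct (P n); auto.
  - intro n. destruct (P n); auto.
  - apply (exp_growth_nonneg_le (fun n => Cnorm (d1 n) + Cnorm (d2 n))); [| exp_growth_tac].
    intro n. pose proof (Cnorm_ge0 (d1 n)). pose proof (Cnorm_ge0 (d2 n)). destruct (P n); lra.
  - apply (exp_growth_nonneg_le (fun n => K1 n + K2 n)); [| exp_growth_tac].
    intro n. pose proof (P1 n). pose proof (P2 n). destruct (P n); lra.
  - apply (exp_growth_nonneg_le (fun n => Cnorm (f n w) + Cnorm (g n w))); [| exp_growth_tac].
    intro n. pose proof (Cnorm_ge0 (f n w)). pose proof (Cnorm_ge0 (g n w)).
    destruct (P n); cbv beta; lra.
Qed.

Lemma taylor_family_exp_growth_at f w r u : taylor_family f w r -> Cnorm (Csub u w) < r ->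
  exp_growthC (fun n => f n u).
Proof.
  intros [d [K [H [P [D [G V]]]]]] Hu.
  apply (exp_growth_nonneg_le (fun n => Cnorm (f n w) + (Cnorm (d n) + K n * r) * r)).
  - intro n. split. apply Cnorm_ge0. apply (taylor_bound_norm_le _ _ (d n) (K n)); auto.
  - exp_growth_tac.
Qed.

Definition rapidly_decaying (c : Z -> Cplx) : Prop :=
  forall f, exp_growth f ->
    ex_series (fun k => Cnorm (c (Z.of_nat k)) * Rabs (f (Z.of_nat k))) /\
    ex_series (fun k => Cnorm (c (- Z.of_nat (S k))%Z) * Rabs (f (- Z.of_nat (S k))%Z)).

Lemma Zseries_rapidly_decaying c a : rapidly_decaying c -> exp_growthC a ->
  Zseries_lim (fun n => Cmul (c n) (a n)) (Zsum (fun n => Cmul (c n) (a n))).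
Proof.
  intros Hc Ha. destruct (Hc _ Ha) as [S1 S2].
  destruct (Zseries_of_majorant (fun n => Cmul (c n) (a n))
              (fun n => Cnorm (c n) * Rabs (Cnorm (a n))) ) as [l Hl]; auto.
  { intro n. rewrite Cnorm_mul, (Rabs_right (Cnorm (a n))) by (apply Rle_ge, Cnorm_ge0). lra. }
  rewrite (Zsum_eq _ _ Hl). auto.
Qed.

Lemma psum_taylor_rem a b c h n : psum (fun k => Csub (Csub (a k) (b k)) (Cmul (c k) h)) n =
  Csub (Csub (psum a n) (psum b n)) (Cmul (psum c n) h).
Proof. induction n; simpl; auto. rewrite IHn. field. Qed.

Lemma sum_f_R0_mul_r (K : nat -> R) X n : sum_f_R0 (fun k => K k * X) n = sum_f_R0 K n * X.
Proof. induction n; simpl; auto. rewrite IHn. ring. Qed.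

Lemma series_taylor_rem_le a b c h pa pb pc (K : nat -> R) X :
  series_lim a pa -> series_lim b pb -> series_lim c pc ->
  (forall k, Cnorm (Csub (Csub (a k) (b k)) (Cmul (c k) h)) <= K k * X) ->
  (forall k, 0 <= K k) -> 0 <= X -> ex_series K ->
  Cnorm (Csub (Csub pa pb) (Cmul pc h)) <= Series K * X.
Proof.
  intros Ha Hb Hc Hk HK HX He.
  apply (Cseq_lim_norm_le (fun n => Csub (Csub (psum a n) (psum b n)) (Cmul (psum c n) h))).
  - apply Cseq_lim_sub. apply Cseq_lim_sub; auto.
    apply (Cseq_lim_ext (fun n => Cmul h (psum c n))). intro; field.
    replace (Cmul pc h) with (Cmul h pc) by field. apply Cseq_lim_scal; auto.
  - intro n. rewrite <- psum_taylor_rem. eapply Rle_trans. apply psum_norm_le. exact Hk.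
    rewrite sum_f_R0_mul_r. apply Rmult_le_compat_r; auto. apply sum_f_R0_le_Series; auto.
Qed.

Lemma taylor_bound_Zseries (f : Z -> Cplx -> Cplx) (d : Z -> Cplx) (K : Z -> R) Sf D w r :
  (forall n, taylor_bound (f n) w (d n) (K n) r) ->
  (forall u, Cnorm (Csub u w) < r -> Zseries_lim (fun n => f n u) (Sf u)) ->
  Zseries_lim d D -> (forall n, 0 <= K n) ->
  ex_series (fun k => K (Z.of_nat k)) -> ex_series (fun k => K (- Z.of_nat (S k))%Z) ->
  taylor_bound Sf w D (Series (fun k => K (Z.of_nat k)) + Series (fun k => K (- Z.of_nat (S k))%Z)) r.
Proof.
  intros Hf Hs Hd HK He1 He2 u Hu.
  assert (Hw : Cnorm (Csub w w) < r)
    by (apply Cnorm_sub_diag; pose proof (Cnorm_ge0 (Csub u w)); lra).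
  destruct (Hs u Hu) as [pu [qu [Hpu [Hqu Eu]]]]. destruct (Hs w Hw) as [pw [qw [Hpw [Hqw Ew]]]].
  destruct Hd as [pd [qd [Hpd [Hqd Ed]]]]. rewrite Eu, Ew, Ed.
  set (h := Csub u w). set (X := Cnorm h * Cnorm h).
  assert (HX : 0 <= X) by (unfold X; pose proof (Cnorm_ge0 h); nra).
  pose proof (series_taylor_rem_le _ _ _ h _ _ _ (fun k => K (Z.of_nat k)) X Hpu Hpw Hpd
     (fun k => Hf (Z.of_nat k) u Hu) (fun k => HK _) HX He1).
  pose proof (series_taylor_rem_le _ _ _ h _ _ _ (fun k => K (- Z.of_nat (S k))%Z) X Hqu Hqw Hqd
     (fun k => Hf _ u Hu) (fun k => HK _) HX He2).
  replace (Csub (Csub (Cadd pu qu) (Cadd pw qw)) (Cmul (Cadd pd qd) h)) with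
    (Cadd (Csub (Csub pu pw) (Cmul pd h)) (Csub (Csub qu qw) (Cmul qd h))) by field.
  eapply Rle_trans. apply Cnorm_add. fold X. lra.
Qed.

Lemma taylor_bound_weighted_Zsum c f w r : rapidly_decaying c -> 0 < r -> taylor_family f w r ->
  exists D K, 0 <= K /\ taylor_bound (fun u => Zsum (fun n => Cmul (c n) (f n u))) w D K r.
Proof.
  intros Hc Hr Hf. pose proof Hf as [d [K [HQ [HK [Hd [HKe Hw]]]]]].
  set (KK := fun n => Cnorm (c n) * K n).
  assert (HKK : forall n, 0 <= KK n) by (intro n; apply Rmult_le_pos; [apply Cnorm_ge0 | auto]).
  destruct (Hc K HKe) as [K1 K2].
  assert (E1 : ex_series (fun k => KK (Z.of_nat k))).
  { eapply ex_series_ext; [| exact K1]. intro k. unfold KK. rewrite Rabs_right; auto. apply Rle_ge; auto. }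
  assert (E2 : ex_series (fun k => KK (- Z.of_nat (S k))%Z)).
  { eapply ex_series_ext; [| exact K2]. intro k. unfold KK. rewrite Rabs_right; auto. apply Rle_ge; auto. }
  exists (Zsum (fun n => Cmul (c n) (d n))),
         (Series (fun k => KK (Z.of_nat k)) + Series (fun k => KK (- Z.of_nat (S k))%Z)).
  split.
  - apply Rplus_le_le_0_compat; apply Series_ge0; auto.
  - apply (taylor_bound_Zseries (fun n u => Cmul (c n) (f n u)) (fun n => Cmul (c n) (d n)) KK); auto.
    + intro n. apply taylor_bound_scal. auto.
    + intros u Hu. apply Zseries_rapidly_decaying; auto.
      apply (taylor_family_exp_growth_at f w r u); auto.
    + apply Zseries_rapidly_decaying; auto.
Qed.

Lemma ex_series_pow_gauss (A c : R) : 1 <= A -> 0 < c ->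
  ex_series (fun k => A ^ k * exp (- c * (INR k * (INR k + 1)))).
Proof.
  intros HA Hc.
  set (a := fun k => A ^ k * exp (- c * (INR k * (INR k + 1)))).
  assert (Hpos : forall n, 0 < a n) by (intro n; apply Rmult_lt_0_compat; [apply pow_lt; lra | apply exp_pos]).
  assert (Hs : forall n, a (S n) = a n * (A * exp (- (2 * c)) ^ S n)).
  { intro n. unfold a. rewrite <- exp_mult_INR, !S_INR. simpl pow.
    replace (- c * ((INR n + 1) * (INR n + 1 + 1))) with
      (- c * (INR n * (INR n + 1)) + (INR n + 1) * - (2 * c)) by ring.
    rewrite exp_plus. ring. }
  apply (ex_series_ext (fun k => Rabs (a k))).
  { intro. apply Rabs_right. apply Rle_ge. left; auto. }
  apply (ex_series_DAlembert _ 0). lra.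
  { intro n. apply Rgt_not_eq, Hpos. }
  apply (is_lim_seq_ext (fun n => A * exp (- (2 * c)) ^ S n)).
  { intro n. rewrite Hs, Rabs_right.
    - field. apply Rgt_not_eq, Hpos.
    - replace (a n * (A * exp (- (2 * c)) ^ S n) / a n) with (A * exp (- (2 * c)) ^ S n)
        by (field; apply Rgt_not_eq, Hpos).
      apply Rle_ge, Rmult_le_pos. lra. apply pow_le. left; apply exp_pos. }
  replace (Finite 0) with (Rbar_mult A 0) by (simpl; f_equal; ring).
  apply is_lim_seq_scal_l. apply -> (is_lim_seq_incr_1 (fun n => exp (- (2 * c)) ^ n)).
  apply is_lim_seq_geom. rewrite Rabs_right by (left; apply exp_pos).
  rewrite <- exp_0. apply exp_increasing. lra.
Qed.

Lemma ex_series_gauss_majorant (b : nat -> R) C A c : 1 <= A -> 0 < c ->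
  (forall k, 0 <= b k <= C * (A ^ k * exp (- c * (INR k * (INR k + 1))))) -> ex_series b.
Proof.
  intros HA Hc Hb. apply (ex_series_Rabs_le _ (fun k => C * (A ^ k * exp (- c * (INR k * (INR k + 1)))))).
  - intro k. rewrite Rabs_right; apply Hb || (apply Rle_ge, Hb).
  - apply (@ex_series_scal_l R_AbsRing R_NormedModule C _ (ex_series_pow_gauss A c HA Hc)).
Qed.

(* [q^{M n (n+1)}] with [M = m/2]; [n (n+1)] is even, so the division is exact. *)
Definition theta_exp (m : nat) (n : Z) : Z := (Z.of_nat m * (n * (n + 1)) / 2)%Z.

Lemma IZR_theta_exp m n : IZR (theta_exp m n) = INR m * (IZR n * (IZR n + 1)) / 2.
Proof.
  assert (exists j, (n * (n + 1) = 2 * j)%Z) as [j Hj].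
  { destruct (Z.Even_or_Odd n) as [[a Ha]|[a Ha]]; subst.
    - exists (a * (2 * a + 1))%Z; ring.
    - exists ((2 * a + 1) * (a + 1))%Z; ring. }
  unfold theta_exp. rewrite Hj. replace (Z.of_nat m * (2 * j))%Z with ((Z.of_nat m * j) * 2)%Z by ring.
  rewrite Z.div_mul by lia. rewrite mult_IZR, <- INR_IZR_INZ.
  replace (IZR n * (IZR n + 1)) with (IZR (n * (n + 1))) by (rewrite mult_IZR, plus_IZR; auto).
  rewrite Hj, mult_IZR. field.
Qed.

Definition theta_coef (m : nat) (eps : Z) (tau : Cplx) (n : Z) : Cplx :=
  Cmul (sgn1 (n * eps)) (Cpowz (e tau) (theta_exp m n)).

Lemma theta_coef_0 m eps tau : theta_coef m eps tau 0 = C1.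
Proof.
  unfold theta_coef, theta_exp. rewrite Z.mul_0_l. simpl. rewrite Z.mul_0_r. simpl.
  apply Cext; simpl; ring.
Qed.

Lemma IZR_mul_succ_ge0 n : 0 <= IZR n * (IZR n + 1).
Proof.
  destruct (Z_lt_le_dec n 0).
  - assert (IZR n <= -1) by (apply IZR_le; lia). nra.
  - assert (0 <= IZR n) by (apply IZR_le; lia). nra.
Qed.

Lemma Cnorm_theta_coef_le m eps tau n : (1 <= m)%nat -> 0 < Im tau ->
  Cnorm (theta_coef m eps tau n) <= exp (- (PI * Im tau) * (IZR n * (IZR n + 1))).
Proof.
  intros Hm Ht. unfold theta_coef. rewrite Cnorm_mul, Cnorm_sgn1, Cnorm_Cpowz_e, IZR_theta_exp, Rmult_1_l.
  apply exp_le_exp.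
  assert (1 <= INR m) by (apply (le_INR 1); auto).
  pose proof PI_RGT_0. pose proof (IZR_mul_succ_ge0 n).
  assert (0 <= PI * Im tau) by nra.
  assert (PI * Im tau * (IZR n * (IZR n + 1)) <= PI * Im tau * (INR m * (IZR n * (IZR n + 1))))
    by (apply Rmult_le_compat_l; nra).
  lra.
Qed.

Lemma theta_coef_rapidly_decaying m eps tau : (1 <= m)%nat -> 0 < Im tau ->
  rapidly_decaying (theta_coef m eps tau).
Proof.
  intros Hm Ht f [C [A [HC [HA Hf]]]].
  set (c := PI * Im tau). assert (Hc : 0 < c) by (unfold c; pose proof PI_RGT_0; nra).
  assert (W : forall n, Cnorm (theta_coef m eps tau n) <= exp (- c * (IZR n * (IZR n + 1))))
    by (intro n; apply Cnorm_theta_coef_le; auto).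
  split.
  - apply (ex_series_gauss_majorant _ C A c); auto. intro k.
    specialize (W (Z.of_nat k)). specialize (Hf (Z.of_nat k)).
    rewrite <- INR_IZR_INZ in W. rewrite Zabs2Nat.id in Hf.
    pose proof (Cnorm_ge0 (theta_coef m eps tau (Z.of_nat k))). pose proof (Rabs_pos (f (Z.of_nat k))).
    split. nra.
    replace (C * (A ^ k * exp (- c * (INR k * (INR k + 1)))))
      with (exp (- c * (INR k * (INR k + 1))) * (C * A ^ k)) by ring.
    apply Rmult_le_compat; auto.
  - apply (ex_series_gauss_majorant _ (C * A) A c); auto. intro k.
    specialize (W (- Z.of_nat (S k))%Z). specialize (Hf (- Z.of_nat (S k))%Z).
    replace (Z.abs_nat (- Z.of_nat (S k))) with (S k) in Hf by lia.
    rewrite opp_IZR, <- INR_IZR_INZ, S_INR in W.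
    replace (- (INR k + 1) * (- (INR k + 1) + 1)) with (INR k * (INR k + 1)) in W by ring.
    pose proof (Cnorm_ge0 (theta_coef m eps tau (- Z.of_nat (S k))%Z)).
    pose proof (Rabs_pos (f (- Z.of_nat (S k))%Z)).
    split. nra.
    replace (C * A * (A ^ k * exp (- c * (INR k * (INR k + 1)))))
      with (exp (- c * (INR k * (INR k + 1))) * (C * A ^ S k)) by (simpl; ring).
    apply Rmult_le_compat; auto.
Qed.

(** * The denominators 1 - q^n e(z - u) *)

Definition neg_two_pi_i : Cplx := Copp (mkC 0 (2 * PI)).
Definition pole_coef tau z n : Cplx := Cmul (Cpowz (e tau) n) (e z).
Definition denom tau z n u : Cplx := Csub C1 (Cmul (pole_coef tau z n) (Cexp (Cmul neg_two_pi_i u))).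

Lemma e_sub_Cexp z u : e (Csub z u) = Cmul (e z) (Cexp (Cmul neg_two_pi_i u)).
Proof.
  unfold Csub. rewrite e_add, e_opp. f_equal. unfold e. rewrite Cexp_inv. f_equal.
  unfold neg_two_pi_i. field.
Qed.

Lemma denom_eq tau z n u : denom tau z n u = Csub C1 (Cmul (Cpowz (e tau) n) (e (Csub z u))).
Proof. unfold denom, pole_coef. rewrite e_sub_Cexp. f_equal. field. Qed.

Lemma Cnorm_pole_term tau z n u :
  Cnorm (Cmul (pole_coef tau z n) (Cexp (Cmul neg_two_pi_i u))) =
  exp (2 * PI * (Im u - Im z - IZR n * Im tau)).
Proof.
  unfold pole_coef. rewrite !Cnorm_mul, Cnorm_Cpowz_e, Cnorm_e, Cnorm_Cexp, <- !exp_plus. f_equal.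
  unfold neg_two_pi_i; simpl. ring.
Qed.

Lemma denom_eq0_in_lattice tau z n u : denom tau z n u = C0 -> in_lattice tau z u.
Proof.
  rewrite denom_eq. intro H.
  assert (Cmul (Cpowz (e tau) n) (e (Csub z u)) = C1).
  { replace C1 with (Cadd (Csub C1 (Cmul (Cpowz (e tau) n) (e (Csub z u))))
                          (Cmul (Cpowz (e tau) n) (e (Csub z u)))) by field.
    rewrite H. field. }
  rewrite Cpowz_e, <- e_add in H0. apply e_eq1 in H0. destruct H0 as [k Hk].
  exists n, (- k)%Z. unfold IZC in *. rewrite opp_IZR.
  replace u with (Csub (Cadd (Cmul (IZC n) tau) z) (Cadd (Cmul (IZC n) tau) (Csub z u))) by field.
  unfold IZC. rewrite Hk. apply Cext; simpl; ring.
Qed.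

Lemma in_lattice_denom_eq0 tau z u : in_lattice tau z u -> exists n, denom tau z n u = C0.
Proof.
  intros [a [b ->]]. exists a. rewrite denom_eq, Cpowz_e, <- e_add.
  replace (Cadd (Cmul (IZC a) tau) (Csub z (Cadd z (Cadd (Cmul (IZC a) tau) (IZC b)))))
    with (IZC (- b)) by (unfold IZC; rewrite opp_IZR; apply Cext; simpl; ring).
  rewrite e_int. field.
Qed.

Lemma denom_neq0_off_lattice tau z u n : ~ in_lattice tau z u -> denom tau z n u <> C0.
Proof. intros H E. apply H. eapply denom_eq0_in_lattice; eauto. Qed.

Lemma exp_growthC_pole_coef tau z : exp_growthC (pole_coef tau z).
Proof.
  apply (exp_growth_nonneg_le (fun n => exp ((2 * PI * Rabs (Im tau)) * IZR (Z.abs n) + 0) * Cnorm (e z))).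
  2: { apply exp_growth_mul. apply exp_growth_exp. pose proof PI_RGT_0. pose proof (Rabs_pos (Im tau)). nra.
       apply exp_growth_const. }
  intro n. split. apply Cnorm_ge0. unfold pole_coef. rewrite Cnorm_mul, Cnorm_Cpowz_e.
  apply Rmult_le_compat_r. apply Cnorm_ge0. apply exp_le_exp.
  rewrite abs_IZR. pose proof PI_RGT_0.
  assert (- (IZR n * Im tau) <= Rabs (IZR n) * Rabs (Im tau))
    by (rewrite <- Rabs_mult, <- Rabs_Ropp; apply Rle_abs).
  nra.
Qed.

Lemma taylor_family_denom tau z w r : 0 <= r -> taylor_family (denom tau z) w r.
Proof.
  intro Hr.
  apply (taylor_family_ext (fun n u => Cadd C1 (Cmul (Copp (pole_coef tau z n)) (Cexp (Cmul neg_two_pi_i u))))).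
  { intros n u. unfold denom. field. }
  apply taylor_family_add. apply (taylor_family_const (fun _ => C1)). apply exp_growthC_const.
  apply taylor_family_mul; auto.
  - apply (taylor_family_const (fun n => Copp (pole_coef tau z n))).
    apply exp_growthC_opp, exp_growthC_pole_coef.
  - apply (taylor_family_Cexp (fun _ => neg_two_pi_i) (Cnorm neg_two_pi_i)); auto using Cnorm_ge0.
    intro n. pose proof (Cnorm_ge0 neg_two_pi_i).
    assert (0 <= IZR (Z.abs n)) by (apply IZR_le; lia). nra.
Qed.

Lemma Clim_denom tau z n w : Clim (denom tau z n) w (denom tau z n w).
Proof.
  unfold denom, Csub. apply Clim_add. apply Clim_const.
  apply (Clim_ext (fun u => Cmul (Copp (pole_coef tau z n)) (Cexp (Cmul neg_two_pi_i u))) _ _ _ 1).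
  lra. intros; field.
  replace (Copp (Cmul (pole_coef tau z n) (Cexp (Cmul neg_two_pi_i w))))
    with (Cmul (Copp (pole_coef tau z n)) (Cexp (Cmul neg_two_pi_i w))) by field.
  apply Clim_mul. apply Clim_const. apply Clim_Cexp.
Qed.

Lemma Cnorm_sub1_ge X s a : 0 < a -> Cnorm X = exp s -> a <= Rabs s ->
  1 - exp (- a) <= Cnorm (Csub C1 X).
Proof.
  intros Ha HX Hs. pose proof (exp_pos a). pose proof (exp_pos (- a)).
  assert (Hinv : exp a * exp (- a) = 1)
    by (rewrite <- exp_plus; replace (a + - a) with 0 by ring; apply exp_0).
  destruct (Rle_dec 0 s).
  - rewrite Rabs_right in Hs by lra. pose proof (exp_le_exp _ _ Hs).
    pose proof (Cnorm_sub_ge X C1). rewrite Cnorm_C1, Cnorm_sub_sym in H2.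
    assert (0 <= (exp a - 1) * (exp a - 1) * exp (- a)) by (apply Rmult_le_pos; [apply Rle_0_sqr | lra]).
    assert ((exp a - 1) * (exp a - 1) * exp (- a) =
            exp a * (exp a * exp (- a)) - 2 * (exp a * exp (- a)) + exp (- a)) by ring.
    rewrite Hinv in H4. lra.
  - rewrite Rabs_left in Hs by lra. assert (exp s <= exp (- a)) by (apply exp_le_exp; lra).
    pose proof (Cnorm_sub_ge C1 X). rewrite Cnorm_C1 in H2. lra.
Qed.

Lemma denom_lower_bound_near tau z w (P : Z -> bool) j :
  (forall n, P n = true -> denom tau z n w <> C0) ->
  exists rj dj, 0 < rj /\ 0 < dj /\
    (P j = true -> forall u, Cnorm (Csub u w) < rj -> dj <= Cnorm (denom tau z j u)).
Proof.
  intro HP. destruct (P j) eqn:Pj.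
  - specialize (HP j Pj). pose proof (Cnorm_gt0 _ HP).
    destruct (Clim_denom tau z j w (Cnorm (denom tau z j w) / 2)) as [d [Hd Hl]]. lra.
    exists d, (Cnorm (denom tau z j w) / 2). split; auto. split. lra. intros _ u Hu.
    destruct (Req_dec (Cnorm (Csub u w)) 0) as [E|E].
    + apply Cnorm_eq0 in E. replace u with w by (replace u with (Cadd (Csub u w) w) by field; rewrite E; field).
      lra.
    + pose proof (Cnorm_ge0 (Csub u w)). specialize (Hl u ltac:(lra)).
      pose proof (Cnorm_sub_ge (denom tau z j w) (denom tau z j u)). rewrite Cnorm_sub_sym in Hl. lra.
  - exists 1, 1. split. lra. split. lra. discriminate.
Qed.

Lemma Int_part_far y n : n <> Int_part y -> n <> (Int_part y + 1)%Z -> 1 <= Rabs (y - IZR n).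
Proof.
  intros H1 H2. destruct (base_Int_part y) as [Hy1 Hy2]. destruct (Z_lt_le_dec n (Int_part y)).
  - assert (IZR n <= IZR (Int_part y) - 1) by (rewrite <- minus_IZR; apply IZR_le; lia).
    rewrite Rabs_right; lra.
  - assert (IZR (Int_part y) + 2 <= IZR n) by (rewrite <- plus_IZR; apply IZR_le; lia).
    rewrite Rabs_left; lra.
Qed.

Lemma denom_lower_bound_far tau z w u n : 0 < Im tau ->
  Im tau <= Rabs (Im w - Im z - IZR n * Im tau) -> Rabs (Im u - Im w) < Im tau / 2 ->
  1 - exp (- (PI * Im tau)) <= Cnorm (denom tau z n u).
Proof.
  intros Ht Hfar Hu. pose proof PI_RGT_0.
  apply (Cnorm_sub1_ge _ (2 * PI * (Im u - Im z - IZR n * Im tau))); [nra | apply Cnorm_pole_term |].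
  replace (2 * PI * (Im u - Im z - IZR n * Im tau))
    with (2 * PI * ((Im w - Im z - IZR n * Im tau) + (Im u - Im w))) by ring.
  rewrite Rabs_mult, (Rabs_right (2 * PI)) by lra.
  assert (Im tau / 2 <= Rabs (Im w - Im z - IZR n * Im tau + (Im u - Im w))).
  { pose proof (Rabs_triang_inv (Im w - Im z - IZR n * Im tau) (- (Im u - Im w))) as T.
    rewrite Rabs_Ropp in T.
    replace (Im w - Im z - IZR n * Im tau - - (Im u - Im w))
      with (Im w - Im z - IZR n * Im tau + (Im u - Im w)) in T by ring.
    lra. }
  nra.
Qed.

(* Only the two indices n with n Im τ nearest to Im (w - z) can make 1 - q^n e(z - u) small:
   for all others |q^n e(z - u)| stays outside (e^{-π Im τ}, e^{π Im τ}). *)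
Lemma denom_lower_bound tau z w (P : Z -> bool) : 0 < Im tau ->
  (forall n, P n = true -> denom tau z n w <> C0) ->
  exists r dl, 0 < r /\ 0 < dl /\
    forall u, Cnorm (Csub u w) < r -> forall n, P n = true -> dl <= Cnorm (denom tau z n u).
Proof.
  intros Ht HP. set (t := Im tau) in *.
  set (y := (Im w - Im z) / t). set (N := Int_part y).
  destruct (denom_lower_bound_near tau z w P N HP) as [r1 [d1 [Hr1 [Hd1 H1]]]].
  destruct (denom_lower_bound_near tau z w P (N + 1)%Z HP) as [r2 [d2 [Hr2 [Hd2 H2]]]].
  set (d0 := 1 - exp (- (PI * t))).
  assert (Hd0 : 0 < d0).
  { unfold d0. assert (exp (- (PI * t)) < 1) by (rewrite <- exp_0; apply exp_increasing;
      pose proof PI_RGT_0; nra). lra. }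
  set (r := Rmin (t / 2) (Rmin r1 r2)). set (dl := Rmin d0 (Rmin d1 d2)).
  assert (r <= t / 2 /\ r <= r1 /\ r <= r2) as [Rt [R1 R2]].
  { unfold r. pose proof (Rmin_l (t / 2) (Rmin r1 r2)). pose proof (Rmin_r (t / 2) (Rmin r1 r2)).
    pose proof (Rmin_l r1 r2). pose proof (Rmin_r r1 r2). lra. }
  assert (dl <= d0 /\ dl <= d1 /\ dl <= d2) as [D0 [D1 D2]].
  { unfold dl. pose proof (Rmin_l d0 (Rmin d1 d2)). pose proof (Rmin_r d0 (Rmin d1 d2)).
    pose proof (Rmin_l d1 d2). pose proof (Rmin_r d1 d2). lra. }
  exists r, dl. split; [repeat apply Rmin_pos; lra |]. split; [repeat apply Rmin_pos; lra |].
  intros u Hu n Pn.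
  destruct (Z.eq_dec n N) as [->|HnN]; [specialize (H1 Pn u ltac:(lra)); lra |].
  destruct (Z.eq_dec n (N + 1)) as [->|HnN1]; [specialize (H2 Pn u ltac:(lra)); lra |].
  enough (d0 <= Cnorm (denom tau z n u)) by lra.
  apply (denom_lower_bound_far tau z w u n); auto.
  - change (t <= Rabs (Im w - Im z - IZR n * t)).
    replace (Im w - Im z - IZR n * t) with (t * (y - IZR n)) by (unfold y; field; lra).
    rewrite Rabs_mult, Rabs_right by lra.
    pose proof (Int_part_far y n HnN HnN1). nra.
  - change (Rabs (Im u - Im w) < t / 2).
    pose proof (Im_le_Cnorm (Csub u w)) as HH. simpl in HH. unfold Rminus. lra.
Qed.

(** * Holomorphy of F off z + Zτ + Z *)

(* [e(-2 M n u) = Cexp (theta_rate m n * u)]. *)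
Definition theta_rate (m : nat) (n : Z) : Cplx :=
  Cmul (mkC 0 (2 * PI)) (Copp (Cmul (RtoC 2) (Cmul (Mval m) (IZC n)))).

Definition term m tau z n u : Cplx :=
  Cmul (Cexp (Cmul (theta_rate m n) u)) (Cinv (denom tau z n u)).

Definition masked_term m tau z (P : Z -> bool) n u : Cplx := if P n then term m tau z n u else C0.

Definition prefactor m z u : Cplx := e (Cmul (Mval m) (Csub z u)).

Definition summand m eps tau z (n : Z) (u : Cplx) : Cplx :=
  Cdiv
    (Cmul (sgn1 (n * eps)%Z)
       (Cmul (e (Copp (Cmul (RtoC 2) (Cmul (Mval m) (Cmul (IZC n) u)))))
             (Cpowz (e tau) (Z.of_nat m * (n * (n + 1)) / 2)%Z)))
    (Csub C1 (Cmul (Cpowz (e tau) n) (e (Csub z u)))).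

Lemma F_unfold m eps tau z u :
  F m eps tau z u = Cmul (prefactor m z u) (Zsum (fun n => summand m eps tau z n u)).
Proof. reflexivity. Qed.

Lemma summand_eq m eps tau z n u : summand m eps tau z n u = Cmul (theta_coef m eps tau n) (term m tau z n u).
Proof.
  unfold summand, theta_coef, term, Cdiv. rewrite <- denom_eq. fold (theta_exp m n).
  replace (e (Copp (Cmul (RtoC 2) (Cmul (Mval m) (Cmul (IZC n) u)))))
    with (Cexp (Cmul (theta_rate m n) u)) by (unfold e, theta_rate; f_equal; field).
  ring.
Qed.

Lemma F_eq m eps tau z u :
  F m eps tau z u = Cmul (prefactor m z u) (Zsum (fun n => Cmul (theta_coef m eps tau n) (term m tau z n u))).
Proof.
  rewrite F_unfold. f_equal. f_equal. apply functional_extensionality. intro n. apply summand_eq.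
Qed.

Lemma Cnorm_theta_rate m n : Cnorm (theta_rate m n) = 2 * PI * INR m * IZR (Z.abs n).
Proof.
  unfold theta_rate. rewrite Cnorm_mul, Cnorm_opp, Cnorm_2PIi.
  replace (Cmul (RtoC 2) (Cmul (Mval m) (IZC n))) with (RtoC (INR m * IZR n))
    by (unfold Mval, IZC, RtoC; apply Cext; simpl; field).
  rewrite Cnorm_RtoC, Rabs_mult, abs_IZR, (Rabs_right (INR m)) by (apply Rle_ge, pos_INR).
  ring.
Qed.

Lemma theta_rate_0 m : theta_rate m 0 = C0.
Proof. unfold theta_rate, IZC, Mval, RtoC. apply Cext; simpl; ring. Qed.

(* The mask is realised by replacing the excluded denominators by 1, which keeps all
   denominators of the family bounded away from 0. *)
Lemma taylor_family_masked_term m tau z (P : Z -> bool) w r dl : 0 < r -> 0 < dl ->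
  (forall u, Cnorm (Csub u w) < r -> forall n, P n = true -> dl <= Cnorm (denom tau z n u)) ->
  taylor_family (masked_term m tau z P) w r.
Proof.
  intros Hr Hdl Hlow.
  set (g := fun n => if P n then denom tau z n else fun _ => C1).
  apply (taylor_family_ext (fun n u => Cmul (if P n then C1 else C0)
           (Cmul (Cexp (Cmul (theta_rate m n) u)) (Cinv (g n u))))).
  { intros n u. unfold masked_term, term, g. destruct (P n); ring. }
  apply taylor_family_mul; [lra | |].
  { apply (taylor_family_const (fun n => if P n then C1 else C0)).
    apply (exp_growth_nonneg_le (fun _ => 1)); [| apply exp_growth_const].
    intro n. destruct (P n); rewrite ?Cnorm_C1, ?Cnorm_C0; lra. }
  apply taylor_family_mul; [lra | |].
  - apply (taylor_family_Cexp _ (2 * PI * INR m)).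
    + pose proof PI_RGT_0. pose proof (pos_INR m). nra.
    + lra.
    + intro n. rewrite Cnorm_theta_rate. pose proof PI_RGT_0. pose proof (pos_INR m). nra.
  - apply (taylor_family_inv _ _ _ (Rmin dl 1)); auto.
    + apply Rmin_pos; lra.
    + intros n u Hu. unfold g. pose proof (Rmin_l dl 1). pose proof (Rmin_r dl 1).
      destruct (P n) eqn:Pn.
      * specialize (Hlow u Hu n Pn). lra.
      * rewrite Cnorm_C1. lra.
    + apply taylor_family_select. apply taylor_family_denom; lra.
      apply (taylor_family_const (fun _ => C1)). apply exp_growthC_const.
Qed.

Lemma theta_series_taylor m eps tau z (P : Z -> bool) w r dl :
  (1 <= m)%nat -> 0 < Im tau -> 0 < r -> 0 < dl ->
  (forall u, Cnorm (Csub u w) < r -> forall n, P n = true -> dl <= Cnorm (denom tau z n u)) ->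
  (forall u, Cnorm (Csub u w) < r ->
     Zseries_lim (fun n => Cmul (theta_coef m eps tau n) (masked_term m tau z P n u))
                 (Zsum (fun n => Cmul (theta_coef m eps tau n) (masked_term m tau z P n u)))) /\
  exists D K, 0 <= K /\
    taylor_bound (fun u => Zsum (fun n => Cmul (theta_coef m eps tau n) (masked_term m tau z P n u))) w D K r.
Proof.
  intros Hm Ht Hr Hdl Hlow.
  pose proof (taylor_family_masked_term m tau z P w r dl Hr Hdl Hlow) as Hf.
  pose proof (theta_coef_rapidly_decaying m eps tau Hm Ht) as Hc.
  split.
  - intros u Hu. apply Zseries_rapidly_decaying; auto.
    apply (taylor_family_exp_growth_at _ w r); auto.
  - apply taylor_bound_weighted_Zsum; auto.
Qed.

Lemma taylor_bound_prefactor m z w r : 0 <= r -> exists d K, 0 <= K /\ taylor_bound (prefactor m z) w d K r.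
Proof.
  intro Hr. set (a := Copp (Cmul (mkC 0 (2 * PI)) (Mval m))).
  eexists. eexists. split.
  2: { apply (taylor_bound_ext (fun u => Cmul (e (Cmul (Mval m) z)) (Cexp (Cmul a u)))).
       - intro u. unfold prefactor.
         replace (Cmul (Mval m) (Csub z u)) with (Cadd (Cmul (Mval m) z) (Copp (Cmul (Mval m) u))) by field.
         rewrite e_add. f_equal. unfold e, a. f_equal. field.
       - apply taylor_bound_scal, taylor_bound_Cexp; auto. }
  apply Rmult_le_pos. apply Cnorm_ge0. apply taylor_bound_Cexp_coef_ge0; auto.
Qed.

Lemma F_taylor_bound m eps tau z w : (1 <= m)%nat -> 0 < Im tau -> ~ in_lattice tau z w ->
  exists r d K, 0 < r /\ 0 <= K /\ taylor_bound (F m eps tau z) w d K r /\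
    forall u, Cnorm (Csub u w) < r -> ~ in_lattice tau z u.
Proof.
  intros Hm Ht Hw.
  destruct (denom_lower_bound tau z w (fun _ => true) Ht (fun n _ => denom_neq0_off_lattice tau z w n Hw))
    as [r [dl [Hr [Hdl Hlow]]]].
  destruct (theta_series_taylor m eps tau z (fun _ => true) w r dl Hm Ht Hr Hdl Hlow)
    as [_ [D [KS [HKS HS]]]].
  destruct (taylor_bound_prefactor m z w r ltac:(lra)) as [dp [Kp [HKp Hp]]].
  exists r. eexists. eexists. split; [auto | split; [| split]].
  2: { apply (taylor_bound_ext _ _ _ _ _ _ (fun u => eq_sym (F_eq m eps tau z u))).
       exact (taylor_bound_mul _ _ w dp D Kp KS r HKp HKS Hp HS). }
  - apply taylor_mul_coef_ge0; auto using Cnorm_ge0; lra.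
  - intros u Hu HL. destruct (in_lattice_denom_eq0 tau z u HL) as [n Hn].
    specialize (Hlow u Hu n eq_refl). rewrite Hn, Cnorm_C0 in Hlow. lra.
Qed.

Lemma F_holomorphic m eps tau z p : (1 <= m)%nat -> 0 < Im tau -> ~ in_lattice tau z p ->
  holomorphic_at (fun u => F m eps tau z u) p.
Proof.
  intros Hm Ht Hp. destruct (F_taylor_bound m eps tau z p Hm Ht Hp) as [r [_ [_ [Hr [_ [_ Hoff]]]]]].
  exists r. split; auto. intros w Hw.
  destruct (F_taylor_bound m eps tau z w Hm Ht (Hoff w Hw)) as [r' [d [K [Hr' [HK [HF _]]]]]].
  apply (taylor_bound_differentiable _ w d K r'); auto.
Qed.

(** * Quasi-periodicity *)

Definition automorphy_factor m eps tau (lam mu : Z) (u : Cplx) : Cplx :=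
  Cmul (sgn1 (Z.of_nat m * mu + lam * eps)%Z)
       (e (Copp (Cmul (Mval m) (Cadd (Cmul (IZC (lam * lam)) tau) (Cmul (RtoC 2) (Cmul (IZC lam) u)))))).

Definition phase m tau z n u : Cplx :=
  Cadd (Cadd (Cmul (Mval m) (Csub z u)) (Copp (Cmul (RtoC 2) (Cmul (Mval m) (Cmul (IZC n) u)))))
       (Cmul (IZC (theta_exp m n)) tau).

Lemma prefactor_numerator m eps tau z n u :
  Cmul (prefactor m z u)
    (Cmul (sgn1 (n * eps))
       (Cmul (e (Copp (Cmul (RtoC 2) (Cmul (Mval m) (Cmul (IZC n) u))))) (Cpowz (e tau) (theta_exp m n)))) =
  Cmul (sgn1 (n * eps)) (e (phase m tau z n u)).
Proof. unfold prefactor, phase. rewrite Cpowz_e, !e_add. ring. Qed.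

(* The half-integer discrepancy [-M mu (2n+1)] only contributes a sign. *)
Lemma phase_shift m tau z n lam mu u :
  phase m tau z n (Cadd u (Cadd (Cmul (IZC lam) tau) (IZC mu))) =
  Cadd (Cadd (Copp (Cmul (Mval m) (Cadd (Cmul (IZC (lam * lam)) tau) (Cmul (RtoC 2) (Cmul (IZC lam) u)))))
             (phase m tau z (n - lam) u))
       (RtoC (IZR (- (Z.of_nat m * mu * (2 * n + 1))) / 2)).
Proof.
  unfold phase, Mval, IZC, RtoC, Csub, Cadd, Cmul, Copp.
  apply Cext; cbn [Re Im]; rewrite !IZR_theta_exp;
  rewrite ?opp_IZR, ?mult_IZR, ?plus_IZR, ?minus_IZR, ?mult_IZR, <- ?INR_IZR_INZ; field.
Qed.

Lemma sgn1_phase_shift m eps n lam mu :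
  sgn1 (n * eps + - (Z.of_nat m * mu * (2 * n + 1))) =
  Cmul (sgn1 (Z.of_nat m * mu + lam * eps)) (sgn1 ((n - lam) * eps)).
Proof.
  rewrite <- sgn1_add.
  replace (n * eps + - (Z.of_nat m * mu * (2 * n + 1)))%Z
    with ((Z.of_nat m * mu + lam * eps + (n - lam) * eps) + 2 * (- (Z.of_nat m * mu * (n + 1))))%Z by ring.
  apply sgn1_add_even.
Qed.

Lemma denom_shift tau z n lam mu u :
  Cmul (Cpowz (e tau) n) (e (Csub z (Cadd u (Cadd (Cmul (IZC lam) tau) (IZC mu))))) =
  Cmul (Cpowz (e tau) (n - lam)) (e (Csub z u)).
Proof.
  rewrite !Cpowz_e, <- !e_add.
  rewrite <- (e_add_int (Cadd (Cmul (IZC (n - lam)) tau) (Csub z u)) (- mu)).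
  f_equal. unfold IZC, RtoC. apply Cext; simpl; rewrite ?minus_IZR, ?opp_IZR; ring.
Qed.

Lemma prefactor_summand_eq m eps tau z n u :
  Cmul (prefactor m z u) (summand m eps tau z n u) =
  Cmul (sgn1 (n * eps)) (Cmul (e (phase m tau z n u))
                              (Cinv (Csub C1 (Cmul (Cpowz (e tau) n) (e (Csub z u)))))).
Proof.
  unfold summand, Cdiv. fold (theta_exp m n).
  match goal with |- Cmul ?p (Cmul (Cmul ?s ?x) ?d) = _ =>
    transitivity (Cmul (Cmul p (Cmul s x)) d); [ring |] end.
  rewrite prefactor_numerator. ring.
Qed.

Lemma prefactor_summand_shift m eps tau z n lam mu u :
  Cmul (prefactor m z (Cadd u (Cadd (Cmul (IZC lam) tau) (IZC mu))))
       (summand m eps tau z n (Cadd u (Cadd (Cmul (IZC lam) tau) (IZC mu)))) =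
  Cmul (automorphy_factor m eps tau lam mu u) (Cmul (prefactor m z u) (summand m eps tau z (n - lam) u)).
Proof.
  rewrite !prefactor_summand_eq, denom_shift, phase_shift, !e_add, e_half_int.
  set (D := Cinv (Csub C1 (Cmul (Cpowz (e tau) (n - lam)) (e (Csub z u))))).
  set (A := Copp (Cmul (Mval m) (Cadd (Cmul (IZC (lam * lam)) tau) (Cmul (RtoC 2) (Cmul (IZC lam) u))))).
  transitivity (Cmul (Cmul (sgn1 (n * eps)) (sgn1 (- (Z.of_nat m * mu * (2 * n + 1)))))
                     (Cmul (e A) (Cmul (e (phase m tau z (n - lam) u)) D))); [ring |].
  rewrite <- sgn1_add, (sgn1_phase_shift m eps n lam mu). unfold automorphy_factor. fold A. ring.
Qed.

Lemma summand_Zseries m eps tau z u : (1 <= m)%nat -> 0 < Im tau -> ~ in_lattice tau z u ->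
  Zseries_lim (fun n => summand m eps tau z n u) (Zsum (fun n => summand m eps tau z n u)).
Proof.
  intros Hm Ht Hu.
  destruct (denom_lower_bound tau z u (fun _ => true) Ht (fun n _ => denom_neq0_off_lattice tau z u n Hu))
    as [r [dl [Hr [Hdl Hlow]]]].
  destruct (theta_series_taylor m eps tau z (fun _ => true) u r dl Hm Ht Hr Hdl Hlow) as [Hc _].
  specialize (Hc u (Cnorm_sub_diag u r Hr)).
  assert (H : Zseries_lim (fun n => summand m eps tau z n u)
                (Zsum (fun n => Cmul (theta_coef m eps tau n) (masked_term m tau z (fun _ => true) n u)))).
  { eapply Zseries_ext; [| exact Hc]. intro n. rewrite summand_eq. reflexivity. }
  rewrite (Zsum_eq _ _ H). auto.
Qed.

Lemma F_quasi_periodic m eps tau z lam mu u : (1 <= m)%nat -> 0 < Im tau -> ~ in_lattice tau z u ->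
  F m eps tau z (Cadd u (Cadd (Cmul (IZC lam) tau) (IZC mu))) =
  Cmul (automorphy_factor m eps tau lam mu u) (F m eps tau z u).
Proof.
  intros Hm Ht Hu.
  set (u' := Cadd u (Cadd (Cmul (IZC lam) tau) (IZC mu))).
  set (fac := automorphy_factor m eps tau lam mu u).
  set (S := Zsum (fun n => summand m eps tau z n u)).
  assert (Hp' : prefactor m z u' <> C0) by apply e_neq0.
  assert (Hshift : Zseries_lim (fun n => Cmul (prefactor m z u') (summand m eps tau z n u'))
                               (Cmul fac (Cmul (prefactor m z u) S))).
  { pose proof (Zseries_scal fac _ _ (Zseries_shift lam _ _
                  (Zseries_scal (prefactor m z u) _ _ (summand_Zseries m eps tau z u Hm Ht Hu)))) as H.
    eapply Zseries_ext; [| exact H]. intro n. symmetry. apply prefactor_summand_shift. }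
  assert (Hsum : Zseries_lim (fun n => summand m eps tau z n u')
                             (Cmul (Cinv (prefactor m z u')) (Cmul fac (Cmul (prefactor m z u) S)))).
  { eapply Zseries_ext; [| exact (Zseries_scal _ _ _ Hshift)]. intro n. cbv beta. field. auto. }
  rewrite !F_unfold, (Zsum_eq _ _ Hsum). fold S. field. auto.
Qed.

(** * The poles and the residue at u = z *)

Lemma Clim_neq0_near f p l : Clim f p l -> l <> C0 ->
  exists r, 0 < r /\ forall u, 0 < Cnorm (Csub u p) < r -> f u <> C0.
Proof.
  intros H Hl. pose proof (Cnorm_gt0 _ Hl).
  destruct (H (Cnorm l) H0) as [r [Hr Hf]]. exists r. split; auto. intros u Hu E.
  specialize (Hf u Hu). rewrite E in Hf.
  replace (Csub C0 l) with (Copp l) in Hf by field. rewrite Cnorm_opp in Hf. lra.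
Qed.

Lemma pole_term_0_z tau z : Cmul (pole_coef tau z 0) (Cexp (Cmul neg_two_pi_i z)) = C1.
Proof.
  unfold pole_coef, neg_two_pi_i, e. simpl Cpowz.
  replace (Cmul (Copp (mkC 0 (2 * PI))) z) with (Copp (Cmul (mkC 0 (2 * PI)) z)) by field.
  rewrite <- (Cexp_opp (Cmul (mkC 0 (2 * PI)) z)) at 2. ring.
Qed.

Lemma denom_0_z tau z : denom tau z 0 z = C0.
Proof. unfold denom. rewrite pole_term_0_z. field. Qed.

Lemma denom_z_neq0 tau z n : 0 < Im tau -> n <> 0%Z -> denom tau z n z <> C0.
Proof.
  intros Ht Hn E. unfold denom in E.
  assert (X1 : Cmul (pole_coef tau z n) (Cexp (Cmul neg_two_pi_i z)) = C1).
  { replace C1 with (Cadd (Csub C1 (Cmul (pole_coef tau z n) (Cexp (Cmul neg_two_pi_i z))))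
                          (Cmul (pole_coef tau z n) (Cexp (Cmul neg_two_pi_i z)))) by field.
    rewrite E. field. }
  pose proof (Cnorm_pole_term tau z n z) as H. rewrite X1, Cnorm_C1 in H.
  replace (2 * PI * (Im z - Im z - IZR n * Im tau)) with (- (2 * PI * Im tau) * IZR n) in H by ring.
  apply (f_equal ln) in H. rewrite ln_1, ln_exp in H.
  assert (IZR n <> 0) by (apply not_0_IZR; auto). pose proof PI_RGT_0.
  assert (2 * PI * Im tau <> 0) by nra.
  symmetry in H. apply Rmult_integral in H. destruct H; lra.
Qed.

Lemma Clim_denom_0_quotient tau z :
  Clim (fun u => Cdiv (denom tau z 0 u) (Csub u z)) z (mkC 0 (2 * PI)).
Proof.
  set (c := Copp (pole_coef tau z 0)).
  assert (HT : taylor_bound (denom tau z 0) z (Cadd C0 (Cmul c (Cmul neg_two_pi_i (Cexp (Cmul neg_two_pi_i z)))))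
     (0 + Cnorm c * (Cnorm (Cexp (Cmul neg_two_pi_i z)) * Cexp_rem_coef (Cnorm neg_two_pi_i * 1)
                      * (Cnorm neg_two_pi_i * Cnorm neg_two_pi_i))) 1).
  { apply (taylor_bound_ext (fun u => Cadd C1 (Cmul c (Cexp (Cmul neg_two_pi_i u))))).
    - intro u; unfold denom, c; field.
    - apply taylor_bound_add. apply taylor_bound_const. apply taylor_bound_scal, taylor_bound_Cexp. lra. }
  eapply Clim_val.
  - apply (Clim_ext (fun u => Cdiv (Csub (denom tau z 0 u) (denom tau z 0 z)) (Csub u z)) _ _ _ 1); [lra | |].
    + intros u _. rewrite denom_0_z. unfold Cdiv. ring.
    + refine (taylor_bound_derivative _ _ _ _ _ _ Rlt_0_1 HT).
      pose proof (Cnorm_ge0 c). pose proof (taylor_bound_Cexp_coef_ge0 neg_two_pi_i z 1 ltac:(lra)). nra.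
  - unfold c. replace (Cadd C0 (Cmul (Copp (pole_coef tau z 0)) (Cmul neg_two_pi_i (Cexp (Cmul neg_two_pi_i z)))))
      with (Copp (Cmul neg_two_pi_i (Cmul (pole_coef tau z 0) (Cexp (Cmul neg_two_pi_i z))))) by ring.
    rewrite pole_term_0_z. unfold neg_two_pi_i. apply Cext; simpl; ring.
Qed.

Definition nonzero_index (n : Z) : bool := negb (Z.eqb n 0).

Definition theta_tail m eps tau z u : Cplx :=
  Zsum (fun n => Cmul (theta_coef m eps tau n) (masked_term m tau z nonzero_index n u)).

(* The n = 0 term is split off: its denominator is the only one vanishing at u = z. *)
Lemma F_near_z m eps tau z u : (1 <= m)%nat -> 0 < Im tau ->
  Zseries_lim (fun n => Cmul (theta_coef m eps tau n) (masked_term m tau z nonzero_index n u))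
              (theta_tail m eps tau z u) ->
  Csub u z <> C0 -> denom tau z 0 u <> C0 ->
  Cmul (Csub u z) (F m eps tau z u) =
  Cmul (prefactor m z u)
       (Cadd (Cmul (Csub u z) (theta_tail m eps tau z u)) (Cinv (Cdiv (denom tau z 0 u) (Csub u z)))).
Proof.
  intros Hm Ht Hc Hz Hd.
  assert (Hs : Zseries_lim (fun n => Cmul (theta_coef m eps tau n) (term m tau z n u))
                           (Cadd (theta_tail m eps tau z u) (term m tau z 0 u))).
  { eapply Zseries_ext; [| exact (Zseries_add _ _ _ _ Hc (Zseries_delta (term m tau z 0 u)))].
    intro n. unfold masked_term, nonzero_index. destruct (Z.eqb_spec n 0) as [->|Hn]; simpl.
    - rewrite theta_coef_0. ring.
    - ring. }
  rewrite F_eq, (Zsum_eq _ _ Hs).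
  unfold term. rewrite theta_rate_0. replace (Cmul C0 u) with C0 by ring. rewrite Cexp_0.
  unfold Cdiv. rewrite Cinv_mul, Cinv_inv by auto. ring.
Qed.

Lemma F_residue_and_isolation m eps tau z : (1 <= m)%nat -> 0 < Im tau ->
  Clim (fun u => Cmul (Csub u z) (F m eps tau z u)) z (Cinv (mkC 0 (2 * PI))) /\
  exists r0, 0 < r0 /\ forall u, 0 < Cnorm (Csub u z) < r0 -> ~ in_lattice tau z u.
Proof.
  intros Hm Ht.
  destruct (denom_lower_bound tau z z nonzero_index Ht) as [r [dl [Hr [Hdl Hlow]]]].
  { intros n Hn. apply denom_z_neq0; auto. unfold nonzero_index in Hn.
    destruct (Z.eqb_spec n 0); [discriminate | auto]. }
  destruct (theta_series_taylor m eps tau z nonzero_index z r dl Hm Ht Hr Hdl Hlow)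
    as [Hc [D [KK [HKK HS]]]].
  assert (H2pi : mkC 0 (2 * PI) <> C0) by (intro E; injection E; pose proof PI_RGT_0; lra).
  pose proof (Clim_denom_0_quotient tau z) as Hq.
  destruct (Clim_neq0_near _ _ _ Hq H2pi) as [r1 [Hr1 Hq0]].
  assert (Hd0 : forall u, 0 < Cnorm (Csub u z) < r1 -> denom tau z 0 u <> C0).
  { intros u Hu E. apply (Hq0 u Hu). rewrite E. unfold Cdiv. ring. }
  set (r2 := Rmin r r1). assert (r2 <= r /\ r2 <= r1) as [R1 R2] by (split; [apply Rmin_l | apply Rmin_r]).
  assert (Hr2 : 0 < r2) by (apply Rmin_pos; auto).
  split.
  - assert (Htail : Clim (fun u => Cmul (Csub u z) (theta_tail m eps tau z u)) z C0).
    { apply (Clim_mul_sub_bounded _ z (Cnorm (theta_tail m eps tau z z) + (Cnorm D + KK * r) * r) r Hr).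
      intros u Hu.
      apply (taylor_bound_norm_le _ z D KK r); auto. lra. }
    destruct (taylor_bound_prefactor m z z 1 ltac:(lra)) as [dp [Kp [HKp Hp]]].
    pose proof (taylor_bound_Clim _ _ _ _ _ HKp Rlt_0_1 Hp) as Hpre.
    pose proof (Clim_mul _ _ _ _ _ Hpre (Clim_add _ _ _ _ _ Htail (Clim_inv _ _ _ H2pi Hq))) as HT.
    eapply Clim_val; [eapply (Clim_ext _ _ _ _ r2 Hr2); [| exact HT] |].
    { intros u Hu. cbv beta. symmetry. apply F_near_z; auto. apply Hc; lra. apply Cnorm_neq0; lra. apply Hd0; lra. }
    unfold prefactor. replace (Cmul (Mval m) (Csub z z)) with C0 by ring. rewrite e_0. ring.
  - exists r2. split; auto. intros u Hu HL.
    destruct (in_lattice_denom_eq0 tau z u HL) as [n Hn].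
    destruct (Z.eqb_spec n 0) as [->|Hn0].
    + apply (Hd0 u); auto. lra.
    + assert (nonzero_index n = true) by (unfold nonzero_index; destruct (Z.eqb_spec n 0); auto).
      specialize (Hlow u ltac:(lra) n H). rewrite Hn, Cnorm_C0 in Hlow. lra.
Qed.

Lemma Clim_automorphy_factor m eps tau lam mu w :
  Clim (automorphy_factor m eps tau lam mu) w (automorphy_factor m eps tau lam mu w).
Proof.
  set (c0 := Copp (Cmul (Mval m) (Cmul (IZC (lam * lam)) tau))).
  set (c1 := Copp (Cmul (Mval m) (Cmul (RtoC 2) (IZC lam)))).
  assert (E : forall v, automorphy_factor m eps tau lam mu v =
                        Cmul (sgn1 (Z.of_nat m * mu + lam * eps)%Z) (e (Cadd c0 (Cmul c1 v))))
    by (intro v; unfold automorphy_factor; f_equal; f_equal; unfold c0, c1; ring).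
  apply (Clim_ext (fun v => Cmul (sgn1 (Z.of_nat m * mu + lam * eps)%Z) (e (Cadd c0 (Cmul c1 v)))) _ _ _ 1).
  - lra.
  - intros; symmetry; apply E.
  - rewrite E. apply Clim_mul. apply Clim_const. apply Clim_e.
Qed.

Lemma F_simple_pole m eps tau z p : (1 <= m)%nat -> 0 < Im tau -> in_lattice tau z p ->
  exists l, Clim (fun u => Cmul (Csub u p) (F m eps tau z u)) p l.
Proof.
  intros Hm Ht [lam [mu ->]].
  set (c := Cadd (Cmul (IZC lam) tau) (IZC mu)).
  destruct (F_residue_and_isolation m eps tau z Hm Ht) as [Hres [r0 [Hr0 Hfree]]].
  pose proof (Clim_shift _ z c _ (Clim_mul _ _ _ _ _ (Clim_automorphy_factor m eps tau lam mu z) Hres)) as HS.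
  eexists. eapply (Clim_ext _ _ _ _ r0 Hr0); [| exact HS].
  intros u Hu. cbv beta. set (v := Csub u c).
  assert (Hv : Csub v z = Csub u (Cadd z c)) by (unfold v; ring).
  assert (Hvl : ~ in_lattice tau z v) by (apply Hfree; rewrite Hv; auto).
  pose proof (F_quasi_periodic m eps tau z lam mu v Hm Ht Hvl) as Q.
  replace (Cadd v (Cadd (Cmul (IZC lam) tau) (IZC mu))) with u in Q by (unfold v, c; ring).
  rewrite Q, Hv. ring.
Qed.

Theorem lemma3p1 (m : nat) (eps : Z) (tau z : Cplx) :
  (0 < m)%nat ->
  (eps = 0%Z \/ eps = 1%Z) ->
  0 < Im tau ->
  (* quasi-periodicity in u (where F is defined, i.e. off the pole set) *)
  (forall (lam mu : Z) (u : Cplx), ~ in_lattice tau z u ->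
     F m eps tau z (Cadd u (Cadd (Cmul (IZC lam) tau) (IZC mu))) =
     Cmul (sgn1 (Z.of_nat m * mu + lam * eps)%Z)
       (Cmul (e (Copp (Cmul (Mval m)
                 (Cadd (Cmul (IZC (lam * lam)) tau) (Cmul (RtoC 2) (Cmul (IZC lam) u))))))
             (F m eps tau z u))) /\
  (* holomorphic away from z + Z tau + Z *)
  (forall p : Cplx, ~ in_lattice tau z p -> holomorphic_at (fun u => F m eps tau z u) p) /\
  (* at most simple poles at the points of z + Z tau + Z *)
  (forall p : Cplx, in_lattice tau z p ->
     exists l : Cplx, Clim (fun u => Cmul (Csub u p) (F m eps tau z u)) p l) /\
  (* residue at u = z is 1/(2 pi i) *)
  Clim (fun u => Cmul (Csub u z) (F m eps tau z u)) z (Cinv (mkC 0 (2 * PI))).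
Proof.
  intros Hm _ Ht. assert (Hm1 : (1 <= m)%nat) by lia.
  split; [| split; [| split]].
  - intros lam mu u Hu. rewrite F_quasi_periodic by auto.
    unfold automorphy_factor. ring.
  - intros p Hp. apply F_holomorphic; auto.
  - intros p Hp. apply F_simple_pole; auto.
  - apply (F_residue_and_isolation m eps tau z Hm1 Ht).
Qed.
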